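(* For $k$ sufficiently large and every $\ell\in\mathbb Z/D\mathbb Z$, $\gamma^-_{-\ell}=-\gamma^+_\ell$.
   Context: Standing setup. $(E,\omega)$ is a real $2$-dimensional symplectic vector space with a compatible linear complex structure $j$; $K_j=\{\alpha\in E^*\otimes\mathbb C:\alpha(j\cdot)=i\alpha\}$. A half-form line is a complex line $\delta$ with an isomorphism $\varphi:\delta^{\otimes2}\to K_j$; $\delta$ carries the Hermitian metric making $\varphi$ an isometry. For $v\in E\setminus\{0\}$, $\Omega_v$ denotes a vector of $\delta$ with $\varphi(\Omega_v^2)(v)=1$ (unique up to sign). $L\to E$ is the trivial Hermitian line bundle with connection $d-i\alpha$, where $\alpha_x(y)=\frac12\omega(x,y)$, and the compatible holomorphic structure; sections of $L^k\otimes\delta$ are identified with functions $E\to\delta$. For $k\in\mathbb Z_{>0}$ and $x\in E$, $T^*_x$ acts on sections of $L^k\otimes\delta$ by $(T^*_x\Psi)(y)=e^{-\frac{ik}{2}\omega(x,y)}\Psi(x+y)$. For a lattice $\Lambda\subset E$, $\mathcal H^\Lambda_k$ is the space of holomorphic sections $\Psi$ of $L^k\otimes\delta$ with $T^*_x\Psi=\Psi$ for all $x\in\Lambda$, with inner product $\langle\Psi_1,\Psi_2\rangle=\int_F\langle\Psi_1,\Psi_2\rangle_\delta\,|\omega|$ ($F$ a fundamental domain of $\Lambda$). For sequences, $O(k^{-\infty})$ means $O(k^{-N})$ for every $N$. Knot state. Fix relatively prime positive integers $a,b$; $D=2ab$. Fix a basis $(\lambda,\mu)$ of $E$ with $\omega(\mu,\lambda)=4\pi$.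 $\mathcal H_k=\mathcal H_k^{\lambda\mathbb Z\oplus\mu\mathbb Z}$; $M=T^*_{\mu/2k}$, $L=T^*_{-\lambda/2k}$ (operators), $q=e^{i\pi/k}$, $q^{s/D}=e^{i\pi s/(kD)}$. Fix $\Omega_\mu$; $(\xi_\ell)_{\ell\in\mathbb Z/2k\mathbb Z}$ is the orthonormal basis of $\mathcal H_k$ with $M\xi_\ell=q^\ell\xi_\ell$, $L\xi_\ell=\xi_{\ell-1}$, $\xi_0(0)\in\mathbb R_{>0}\Omega_\mu$. For $\ell\ge1$, $J_\ell(t)=\frac{t^{ab(1-\ell^2)}}{t^2-t^{-2}}\sum_{r}t^{4abr^2}\bigl(t^{-4(a+b)r+2}-t^{-4(a-b)r-2}\bigr)$, $r$ running over $-\frac{\ell-1}2,-\frac{\ell-1}2+1,\dots,\frac{\ell-1}2$ (colored Jones polynomials of the $(a,b)$ torus knot); $J_0=0$, $J_{-\ell}=-J_\ell$; $\ell\mapsto J_\ell(-e^{i\pi/2k})$ is $2k$-periodic. The knot state is $Z_k=\frac{\sin(\pi/k)}{\sqrt k}\sum_{\ell\in\mathbb Z/2k\mathbb Z}J_\ell(-e^{i\pi/2k})\xi_\ell$, and $Z^0_k=-\frac{i}{2\sqrt k}\sum_{\ell\in\mathbb Z/2k\mathbb Z}\xi_\ell$. Second lattice. $\Omega_\lambda$ is the (fixed, $k$-independent) choice of sign with $Z^0_k(0)=\frac{e^{3i\pi/4}}{\sqrt2}(\frac{k}{2\pi})^{1/4}\Omega_\lambda+O(k^{-\infty})$. $R_D=D\mu\mathbb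 Z\oplus\lambda\mathbb Z$, $\mathcal H_{D,k}=\mathcal H_k^{R_D}\supset\mathcal H_k$ ($\dim=2kD$). $S=T^*_{-\lambda/2kD}$, $R=T^*_{(D\mu-2\lambda)/2kD}$. $(\Psi_n)_{n\in\mathbb Z/2kD\mathbb Z}$ is the orthonormal basis of $\mathcal H_{D,k}$ with $S\Psi_n=q^{n/D}\Psi_n$, $R\Psi_n=\Psi_{n+1}$ and phase such that $\Psi_0(0)=e^{i\pi/4}(\frac k{2\pi})^{1/4}\Omega_\lambda+O(k^{-\infty})$. $\Phi_\ell=\frac1{\sqrt{2kD}}\sum_{n\in\mathbb Z/2kD\mathbb Z}e^{2i\pi n\ell/D}\Psi_n$ ($\ell\in\mathbb Z/D\mathbb Z$). $E_{k,+}$ (resp. $E_{k,-}$) is the span of the $\Psi_n$ with $-ab+a+b\le n<2k-ab-a-b$ (resp. $-2k-ab+a+b\le n<-ab-a-b$); $\perp$ is the orthogonal complement in $\mathcal H_{D,k}$. For $k$ large, $\gamma^\pm_\ell$ ($\ell\in\mathbb Z/D\mathbb Z$) are the unique complex numbers with $Z_k-\sum_\ell\gamma^\pm_\ell\Phi_\ell\in E_{k,\pm}^\perp$. *)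

From Stdlib Require Import Reals Lra Lia ZArith.
Open Scope R_scope.

Definition Cplx : Type := (R * R)%type.
Definition RtoC (r : R) : Cplx := (r, 0).
Definition C0 : Cplx := (0, 0).
Definition C1 : Cplx := (1, 0).
Definition Ci : Cplx := (0, 1).
Definition Cadd (z w : Cplx) : Cplx := (fst z + fst w, snd z + snd w).
Definition Copp (z : Cplx) : Cplx := (- fst z, - snd z).
Definition Csub (z w : Cplx) : Cplx := Cadd z (Copp w).
Definition Cmul (z w : Cplx) : Cplx :=
  (fst z * fst w - snd z * snd w, fst z * snd w + snd z * fst w).
Definition Cscal (r : R) (z : Cplx) : Cplx := (r * fst z, r * snd z).
Definition Cconj (z : Cplx) : Cplx := (fst z, - snd z).
Definition Cnorm (z : Cplx) : R := sqrt (fst z * fst z + snd z * snd z).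
Definition Cinv (z : Cplx) : Cplx :=
  let d := fst z * fst z + snd z * snd z in (fst z / d, - snd z / d).
Definition Cdiv (z w : Cplx) : Cplx := Cmul z (Cinv w).
Definition cis (theta : R) : Cplx := (cos theta, sin theta).

Fixpoint Csum (f : Z -> Cplx) (n : nat) : Cplx :=
  match n with
  | O => C0
  | S m => Cadd (Csum f m) (f (Z.of_nat m))
  end.

(* E = R^2, omega(x,y) = x1 y2 - x2 y1, j(x1,x2) = (-x2,x1) (compatible:
   omega(x, j y) is the Euclidean inner product).  K_j is spanned by
   dz = dx + i dy; the half-form line delta is C with phi(w^2) = w^2 dz. *)
Definition E : Type := (R * R)%type.
Definition Eadd (x y : E) : E := (fst x + fst y, snd x + snd y).
Definition Escal (r : R) (x : E) : E := (r * fst x, r * snd x).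
Definition omega (x y : E) : R := fst x * snd y - snd x * fst y.
Definition jE (x : E) : E := (- snd x, fst x).
Definition dz (v : E) : Cplx := (fst v, snd v).
(* Omega_v : phi(Omega_v^2)(v) = 1 *)
Definition is_Omega (v : E) (w : Cplx) : Prop := Cmul (Cmul w w) (dz v) = C1.
(* Hermitian product on delta making phi an isometry:
   |dz|^2 = 2 for the metric g = omega(., j .), hence <w1,w2> = sqrt 2 w1 conj(w2). *)
Definition hdelta (w1 w2 : Cplx) : Cplx := Cscal (sqrt 2) (Cmul w1 (Cconj w2)).

(* sections of L^k (x) delta, identified with functions E -> delta = C *)
Definition Sec : Type := E -> Cplx.

Definition diff_at (f : Sec) (p : E) (dx dy : Cplx) : Prop :=
  forall eps, 0 < eps -> exists del, 0 < del /\
    forall h1 h2, h1 * h1 + h2 * h2 < del * del ->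
      Cnorm (Csub (Csub (f (fst p + h1, snd p + h2)) (f p))
                  (Cadd (Cscal h1 dx) (Cscal h2 dy)))
      <= eps * sqrt (h1 * h1 + h2 * h2).

(* holomorphic sections of L^k (x) delta: L has connection d - i alpha,
   alpha_x(y) = omega(x,y)/2, so the condition nabla_{d_x} + i nabla_{d_y} = 0
   (the (0,1)-part of the connection of L^k) reads
   d_x Psi + i d_y Psi + (k/2) z Psi = 0,  z = x1 + i x2. *)
Definition holo (k : nat) (f : Sec) : Prop :=
  forall p, exists dx dy, diff_at f p dx dy /\
    Cadd (Cadd dx (Cmul Ci dy)) (Cmul (Cscal (INR k / 2) (dz p)) (f p)) = C0.

Definition Tstar (k : nat) (x : E) (f : Sec) : Sec :=
  fun y => Cmul (cis (- (INR k / 2) * omega x y)) (f (Eadd x y)).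

Definition in_H (k : nat) (u v : E) (f : Sec) : Prop :=
  holo k f /\
  forall (m n : Z) (y : E),
    Tstar k (Eadd (Escal (IZR m) u) (Escal (IZR n) v)) f y = f y.

Definition int01 (g : R -> R -> R) (val : R) : Prop :=
  exists (pr_s : forall t, Riemann_integrable (fun s => g s t) 0 1)
         (pr_t : Riemann_integrable (fun t => RiemannInt (pr_s t)) 0 1),
    RiemannInt pr_t = val.

(* inner product of H^Lambda: integral over the fundamental domain
   F = {s u + t v : s,t in [0,1)} of <Psi1,Psi2>_delta |omega|,
   i.e. |omega(u,v)| * int_{[0,1]^2} <Psi1,Psi2>(s u + t v) ds dt *)
Definition inner_on (u v : E) (f1 f2 : Sec) (c : Cplx) : Prop :=
  let g s t := hdelta (f1 (Eadd (Escal s u) (Escal t v)))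
                      (f2 (Eadd (Escal s u) (Escal t v))) in
  exists r1 r2, int01 (fun s t => fst (g s t)) r1 /\
                int01 (fun s t => snd (g s t)) r2 /\
                c = Cscal (Rabs (omega u v)) (r1, r2).

Definition kron (b : bool) : Cplx := if b then C1 else C0.

Definition Slin (c : Z -> Cplx) (f : Z -> Sec) (n : nat) : Sec :=
  fun y => Csum (fun i => Cmul (c i) (f i y)) n.

(* (xi_l)_{l in Z/2kZ}: orthonormal basis of H_k with M xi_l = q^l xi_l,
   L xi_l = xi_{l-1}, xi_0(0) in R_{>0} Omega_mu. Indexed by Z, 2k-periodic. *)
Definition is_xi_basis (k : nat) (lam mu : E) (Omu : Cplx) (xi : Z -> Sec) : Prop :=
  let K := Z.of_nat (2 * k) in
  (forall l y, xi (l + K)%Z y = xi l y) /\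
  (forall l, in_H k lam mu (xi l)) /\
  (forall l m, (0 <= l < K)%Z -> (0 <= m < K)%Z ->
     inner_on lam mu (xi l) (xi m) (kron (Z.eqb l m))) /\
  (forall f, in_H k lam mu f -> exists c, forall y, f y = Slin c xi (2 * k) y) /\
  (forall l y, Tstar k (Escal (/ (2 * INR k)) mu) (xi l) y
               = Cmul (cis (PI * IZR l / INR k)) (xi l y)) /\
  (forall l y, Tstar k (Escal (- / (2 * INR k)) lam) (xi l) y = xi (l - 1)%Z y) /\
  (exists r, 0 < r /\ xi 0%Z (0, 0) = Cscal r Omu).

(* (Psi_n)_{n in Z/2kDZ}: orthonormal basis of H_{D,k} = H_k^{D mu Z + lam Z}
   with S Psi_n = q^{n/D} Psi_n, R Psi_n = Psi_{n+1}.  Indexed by Z, 2kD-periodic. *)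
Definition is_Psi_basis (k D : nat) (lam mu : E) (Psi : Z -> Sec) : Prop :=
  let N := Z.of_nat (2 * k * D) in
  let u := Escal (INR D) mu in
  (forall n y, Psi (n + N)%Z y = Psi n y) /\
  (forall n, in_H k u lam (Psi n)) /\
  (forall n m, (0 <= n < N)%Z -> (0 <= m < N)%Z ->
     inner_on u lam (Psi n) (Psi m) (kron (Z.eqb n m))) /\
  (forall f, in_H k u lam f -> exists c, forall y, f y = Slin c Psi (2 * k * D) y) /\
  (forall n y, Tstar k (Escal (- / (2 * INR k * INR D)) lam) (Psi n) y
               = Cmul (cis (PI * IZR n / (INR k * INR D))) (Psi n y)) /\
  (forall n y, Tstar k (Escal (/ (2 * INR k * INR D))
                       (Eadd u (Escal (-2) lam))) (Psi n) y = Psi (n + 1)%Z y).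

(* t^m for t = -e^{i pi/2k} = e^{i pi (1 + 1/(2k))}, m an integer *)
Definition tpow (k : nat) (m : Z) : Cplx := cis (PI * (1 + / (2 * INR k)) * IZR m).

(* colored Jones polynomial J_l(t) of the (a,b) torus knot at t = -e^{i pi/2k},
   l >= 1; writing s = 2r = 2j - (l-1), j = 0..l-1:
   J_l = t^{ab(1-l^2)}/(t^2-t^{-2}) sum_j t^{ab s^2}(t^{-2(a+b)s+2} - t^{-2(a-b)s-2});
   J_0 = 0. *)
Definition Jval (a b k : nat) (l : nat) : Cplx :=
  match l with
  | O => C0
  | _ =>
    let A := Z.of_nat a in let B := Z.of_nat b in let L := Z.of_nat l in
    Cdiv
      (Cmul (tpow k (A * B * (1 - L * L))%Z)
        (Csum (fun j => let s := (2 * j - (L - 1))%Z in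
           Cmul (tpow k (A * B * s * s)%Z)
                (Csub (tpow k (- 2 * (A + B) * s + 2)%Z)
                      (tpow k (- 2 * (A - B) * s - 2)%Z))) l))
      (Csub (tpow k 2%Z) (tpow k (-2)%Z))
  end.

Definition knot_state (a b k : nat) (xi : Z -> Sec) : Sec :=
  fun y => Cscal (sin (PI / INR k) / sqrt (INR k))
             (Csum (fun l => Cmul (Jval a b k (Z.to_nat l)) (xi l y)) (2 * k)).

Definition Z0_state (k : nat) (xi : Z -> Sec) : Sec :=
  fun y => Cmul (Cscal (- / (2 * sqrt (INR k))) Ci) (Csum (fun l => xi l y) (2 * k)).

Definition Phi (k D : nat) (Psi : Z -> Sec) (l : Z) : Sec :=
  fun y => Cscal (/ sqrt (INR (2 * k * D)))
     (Csum (fun n => Cmul (cis (2 * PI * IZR n * IZR l / INR D)) (Psi n y)) (2 * k * D)).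

Definition O_inf (u : nat -> R) : Prop :=
  forall N : nat, exists Cst, forall k : nat, (1 <= k)%nat -> Rabs (u k) <= Cst / (INR k ^ N).

(* gamma^{+/-}: Z_k - sum_l gamma_l Phi_l is orthogonal (in H_{D,k}) to E_{k,+/-},
   the span of the Psi_n with lo <= n < hi. *)
Definition gamma_cond (k D : nat) (lam mu : E) (Zk : Sec) (Psi : Z -> Sec)
    (lo hi : Z) (g : Z -> Cplx) : Prop :=
  forall n, (lo <= n < hi)%Z ->
    inner_on (Escal (INR D) mu) lam
      (fun y => Csub (Zk y) (Slin g (Phi k D Psi) D y)) (Psi n) C0.

From Pilot Require Import Defs.
From Stdlib Require Import Reals ZArith.
From Stdlib Require Import Lra Lia List Permutation Znumtheory.
From Coquelicot Require Import Coquelicot.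
(* Re-import the definitions so that they shadow Coquelicot's homonyms (C1). *)
Import Defs.
Open Scope R_scope.

(* Let P be the parity operator (P f)(y) = f(-y).  It preserves holomorphy and
   invariance under a lattice (which is symmetric), and P T*_x P = T*_{-x}.
   - Parity of the bases.  In an orthonormal eigenbasis b of an operator T*_x
     whose eigenvalue is 1 only on b_0, the fixed space is spanned by b_0; as
     P b_0 is fixed as well and b_0(0) <> 0, P b_0 = b_0.  Since a second
     translation shifts the index by +-1 and is conjugated to its inverse by P,
     P b_i = b_{-i}.  This applies to (xi_l) and, for k large (Psi_0(0) <> 0 by
     the asymptotics of Psi_0(0)), to (Psi_n).
   - Reflection of the Jones values: J_{2k-l} = - J_l, because the full sum of
     the 2k summands of J vanishes (an affine change of summation variable
     exchanges the two exponents modulo 4k).  Hence P Z_k = - Z_k.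
   - Writing Z_k = sum_n c_n Psi_n we get c_{-n} = - c_n, and the defining
     condition of gamma^+- says c_n = (2kD)^{-1/2} sum_l gamma^+-_l e^{2i pi nl/D}
     on the window of E_{k,+-}.  For k > 2ab + a + b the window of E_{k,-}
     and the reflected window of E_{k,+} share D consecutive frequencies, so
     the sequence gamma^-_l + gamma^+_{-l} has a vanishing discrete Fourier
     transform on D consecutive frequencies, hence vanishes. *)

Ltac cdes := repeat match goal with z : Cplx |- _ => destruct z end.
Ltac cunf := unfold Csub, Cadd, Copp, Cmul, Cscal, Cconj, C0, C1, Ci, RtoC.
Ltac ceq := first [cunf; simpl; f_equal; ring | cdes; cunf; simpl; f_equal; ring].

Lemma Cadd_0l z : Cadd C0 z = z. Proof. ceq. Qed.
Lemma Cadd_0r z : Cadd z C0 = z. Proof. ceq. Qed.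
Lemma Cadd_comm z w : Cadd z w = Cadd w z. Proof. ceq. Qed.
Lemma Cadd_assoc z w v : Cadd (Cadd z w) v = Cadd z (Cadd w v). Proof. ceq. Qed.
Lemma Cmul_comm z w : Cmul z w = Cmul w z. Proof. ceq. Qed.
Lemma Cmul_assoc z w v : Cmul (Cmul z w) v = Cmul z (Cmul w v). Proof. ceq. Qed.
Lemma Cmul_addr z w v : Cmul z (Cadd w v) = Cadd (Cmul z w) (Cmul z v). Proof. ceq. Qed.
Lemma Cmul_0l z : Cmul C0 z = C0. Proof. ceq. Qed.
Lemma Cmul_0r z : Cmul z C0 = C0. Proof. ceq. Qed.
Lemma Cmul_1l z : Cmul C1 z = z. Proof. ceq. Qed.
Lemma Cmul_1r z : Cmul z C1 = z. Proof. ceq. Qed.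

Lemma Csub_eq0 z w : Csub z w = C0 -> z = w.
Proof. destruct z, w; cunf; simpl; intros H; injection H; intros; f_equal; lra. Qed.
Lemma Cadd_eq0 z w : Cadd z w = C0 -> z = Copp w.
Proof. destruct z, w; cunf; simpl; intros H; injection H; intros; f_equal; lra. Qed.

Lemma Cmul_eq0 z w : Cmul z w = C0 -> w <> C0 -> z = C0.
Proof.
  destruct z as [z1 z2], w as [w1 w2]. unfold Cmul, C0; simpl. intros H Hw.
  injection H; intros H1 H2.
  assert (P : w1 * w1 + w2 * w2 <> 0).
  { intros P. apply Hw. assert (B1 : w1 * w1 = 0) by nra. assert (B2 : w2 * w2 = 0) by nra.
    apply Rmult_integral in B1, B2. destruct B1, B2; subst; auto. }
  assert (E1 : z1 * (w1 * w1 + w2 * w2) = w1 * (z1 * w1 - z2 * w2) + w2 * (z1 * w2 + z2 * w1))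
    by ring.
  assert (E2 : z2 * (w1 * w1 + w2 * w2) = w1 * (z1 * w2 + z2 * w1) - w2 * (z1 * w1 - z2 * w2))
    by ring.
  rewrite H1, H2, !Rmult_0_r, Rplus_0_r in E1. rewrite H1, H2, !Rmult_0_r, Rminus_0_r in E2.
  apply Rmult_integral in E1, E2. destruct E1; [|contradiction].
  destruct E2; [|contradiction]. subst; auto.
Qed.

Lemma cis_add x y : cis (x + y) = Cmul (cis x) (cis y).
Proof. unfold cis, Cmul; simpl; rewrite cos_plus, sin_plus; f_equal; ring. Qed.
Lemma cis_0 : cis 0 = C1.
Proof. unfold cis, C1; rewrite cos_0, sin_0; reflexivity. Qed.

Lemma cis_2piZ x z : cis (x + 2 * PI * IZR z) = cis x.
Proof.
  unfold cis. destruct (Z_le_gt_dec 0 z) as [H|H].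
  - rewrite <- (Z2Nat.id z H), <- INR_IZR_INZ.
    replace (x + 2 * PI * INR (Z.to_nat z)) with (x + 2 * INR (Z.to_nat z) * PI) by ring.
    rewrite cos_period, sin_period; auto.
  - assert (H' : (0 <= - z)%Z) by lia.
    rewrite <- (Z.opp_involutive z), <- (Z2Nat.id (-z) H'), opp_IZR, <- INR_IZR_INZ.
    set (n := Z.to_nat (- z)).
    rewrite <- (cos_period (x + 2 * PI * - INR n) n), <- (sin_period (x + 2 * PI * - INR n) n).
    replace (x + 2 * PI * - INR n + 2 * INR n * PI) with x by ring. auto.
Qed.

Lemma cis_ne1 x : 0 < x < 2 * PI -> cis x <> C1.
Proof.
  intros Hx E. unfold cis, C1 in E. injection E; intros Hs Hc.
  destruct (sin_eq_0_0 _ Hs) as [z ->].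
  assert (Hz : 0 < IZR z < 2) by (generalize PI_RGT_0; intros; split; nra).
  assert (z = 1%Z) by (destruct Hz as [H1 H2]; apply lt_IZR in H1; apply lt_IZR in H2; lia).
  subst. rewrite Rmult_1_l, cos_PI in Hc. lra.
Qed.

Lemma Csum_ext f g n : (forall i, (0 <= i < Z.of_nat n)%Z -> f i = g i) -> Csum f n = Csum g n.
Proof.
  induction n; intros H; simpl; auto. rewrite IHn, H; [reflexivity|lia|]. intros; apply H; lia.
Qed.
Lemma Csum_add f g n : Csum (fun i => Cadd (f i) (g i)) n = Cadd (Csum f n) (Csum g n).
Proof. induction n; simpl. ceq. rewrite IHn. ceq. Qed.
Lemma Csum_cmul c f n : Csum (fun i => Cmul c (f i)) n = Cmul c (Csum f n).
Proof. induction n; simpl. ceq. rewrite IHn. ceq. Qed.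
Lemma Csum_opp f n : Csum (fun i => Copp (f i)) n = Copp (Csum f n).
Proof. induction n; simpl. ceq. rewrite IHn. ceq. Qed.
Lemma Csum_scal r f n : Csum (fun i => Cscal r (f i)) n = Cscal r (Csum f n).
Proof. induction n; simpl. ceq. rewrite IHn. ceq. Qed.
Lemma Csum_zero f n : (forall i, (0 <= i < Z.of_nat n)%Z -> f i = C0) -> Csum f n = C0.
Proof. induction n; intros H; simpl; auto. rewrite IHn, H; [apply Cadd_0l|lia|]. intros; apply H; lia. Qed.
Lemma Csum_split f n m :
  Csum f (n + m) = Cadd (Csum f n) (Csum (fun i => f (i + Z.of_nat n)%Z) m).
Proof.
  induction m; simpl. rewrite Nat.add_0_r, Cadd_0r; reflexivity.
  rewrite Nat.add_succ_r; simpl. rewrite IHm, Cadd_assoc. do 3 f_equal. lia.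
Qed.

Lemma Csum_single f n i0 : (0 <= i0 < Z.of_nat n)%Z ->
  (forall i, (0 <= i < Z.of_nat n)%Z -> i <> i0 -> f i = C0) -> Csum f n = f i0.
Proof.
  induction n; intros Hi H; simpl in *. lia.
  destruct (Z.eq_dec i0 (Z.of_nat n)) as [->|Hne].
  - rewrite Csum_zero. apply Cadd_0l. intros; apply H; lia.
  - rewrite IHn, (H (Z.of_nat n)); try lia. apply Cadd_0r. intros; apply H; lia.
Qed.

Lemma Csum_swap (h : Z -> Z -> Cplx) n1 n2 :
  Csum (fun m => Csum (h m) n1) n2 = Csum (fun l => Csum (fun m => h m l) n2) n1.
Proof.
  induction n2; simpl. symmetry; apply Csum_zero; auto.
  rewrite IHn2, <- Csum_add. reflexivity.
Qed.

(* Sums over the list [0; ...; n-1], used to reindex by a permutation. *)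
Definition zrange (n : nat) : list Z := map Z.of_nat (seq 0 n).
Definition lsum (f : Z -> Cplx) (l : list Z) : Cplx :=
  fold_right (fun x acc => Cadd (f x) acc) C0 l.

Lemma Csum_lsum f n : Csum f n = lsum f (zrange n).
Proof.
  assert (App : forall l1 l2, lsum f (l1 ++ l2) = Cadd (lsum f l1) (lsum f l2)).
  { induction l1; intros; simpl. rewrite Cadd_0l; auto. rewrite IHl1, Cadd_assoc; auto. }
  induction n; auto. simpl Csum. unfold zrange in *.
  rewrite seq_S, map_app, App, <- IHn. simpl. rewrite Cadd_0r; auto.
Qed.

Lemma lsum_perm f l1 l2 : Permutation l1 l2 -> lsum f l1 = lsum f l2.
Proof.
  induction 1; simpl; auto; try congruence.
  rewrite <- !Cadd_assoc, (Cadd_comm (f y)); auto.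
Qed.

Lemma in_zrange i n : In i (zrange n) <-> (0 <= i < Z.of_nat n)%Z.
Proof.
  unfold zrange; rewrite in_map_iff; split.
  - intros [x [<- Hx]]; apply in_seq in Hx; lia.
  - intros H; exists (Z.to_nat i); split. lia. apply in_seq; lia.
Qed.

Lemma Csum_perm f (s : Z -> Z) n :
  (forall i, (0 <= i < Z.of_nat n)%Z -> (0 <= s i < Z.of_nat n)%Z) ->
  (forall i j, (0 <= i < Z.of_nat n)%Z -> (0 <= j < Z.of_nat n)%Z -> s i = s j -> i = j) ->
  Csum (fun i => f (s i)) n = Csum f n.
Proof.
  intros Hrange Hinj. rewrite !Csum_lsum.
  assert (Map : lsum (fun i => f (s i)) (zrange n) = lsum f (map s (zrange n))).
  { induction (zrange n); simpl; congruence. }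
  rewrite Map. apply lsum_perm, Permutation_map_same_l.
  - apply FinFun.Injective_map_NoDup_in.
    + intros x y Hx Hy; apply in_zrange in Hx, Hy; auto.
    + unfold zrange; apply FinFun.Injective_map_NoDup. intros x y; lia. apply seq_NoDup.
  - intros x Hx. apply in_map_iff in Hx. destruct Hx as [y [<- Hy]].
    apply in_zrange in Hy. apply in_zrange; auto.
Qed.

(* The iterated Riemann integral of Defs, restated with Coquelicot's total
   integral, where uniqueness and linearity are available. *)
Definition int01C (g : R -> R -> R) (v : R) : Prop :=
  (forall t, ex_RInt (fun s => g s t) 0 1) /\
  is_RInt (fun t => RInt (fun s => g s t) 0 1) 0 1 v.

Lemma int01_C g v : int01 g v <-> int01C g v.
Proof.
  split.
  - intros [prs [prt Hv]]. split.
    + intros t; apply ex_RInt_Reals_1, prs.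
    + assert (E : forall t, RiemannInt (prs t) = RInt (fun s => g s t) 0 1).
      { intros t; symmetry; apply RInt_Reals. }
      eapply is_RInt_ext. intros; apply E.
      rewrite <- Hv, <- (RInt_Reals _ _ _ prt). apply RInt_correct, ex_RInt_Reals_1, prt.
  - intros [Hs Ht].
    exists (fun t => ex_RInt_Reals_0 _ _ _ (Hs t)).
    assert (E : forall t, RInt (fun s => g s t) 0 1 = RiemannInt (ex_RInt_Reals_0 _ _ _ (Hs t))).
    { intros t; apply RInt_Reals. }
    assert (Ht' : is_RInt (fun t => RiemannInt (ex_RInt_Reals_0 _ _ _ (Hs t))) 0 1 v).
    { eapply is_RInt_ext; [|exact Ht]. intros; apply E. }
    exists (ex_RInt_Reals_0 _ _ _ (ex_intro _ v Ht')).
    rewrite <- RInt_Reals. apply is_RInt_unique; auto.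
Qed.

Lemma int01C_uniq g v1 v2 : int01C g v1 -> int01C g v2 -> v1 = v2.
Proof. intros [_ H1] [_ H2]. rewrite <- (is_RInt_unique _ _ _ _ H1). apply is_RInt_unique; auto. Qed.

Lemma int01C_ext g g' v : (forall s t, g s t = g' s t) -> int01C g v -> int01C g' v.
Proof.
  intros E [H1 H2]. split.
  - intros t; eapply ex_RInt_ext; [|apply H1]. intros; apply E.
  - eapply is_RInt_ext; [|exact H2]. intros. apply RInt_ext. intros; apply E.
Qed.

Lemma int01C_lin g1 g2 v1 v2 a b : int01C g1 v1 -> int01C g2 v2 ->
  int01C (fun s t => a * g1 s t + b * g2 s t) (a * v1 + b * v2).
Proof.
  intros [A1 B1] [A2 B2].
  assert (Inner : forall t, is_RInt (fun s => a * g1 s t + b * g2 s t) 0 1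
            (a * RInt (fun s => g1 s t) 0 1 + b * RInt (fun s => g2 s t) 0 1)).
  { intros t. apply (is_RInt_plus (fun s => a * g1 s t) (fun s => b * g2 s t)).
    - exact (is_RInt_scal (fun s => g1 s t) 0 1 a _ (RInt_correct _ _ _ (A1 t))).
    - exact (is_RInt_scal (fun s => g2 s t) 0 1 b _ (RInt_correct _ _ _ (A2 t))). }
  split.
  - intros t. eexists. apply Inner.
  - eapply is_RInt_ext.
    + intros t _. symmetry. apply is_RInt_unique, Inner.
    + apply (is_RInt_plus (fun t => a * RInt (fun s => g1 s t) 0 1)
                          (fun t => b * RInt (fun s => g2 s t) 0 1)).
      * exact (is_RInt_scal _ 0 1 a _ B1).
      * exact (is_RInt_scal _ 0 1 b _ B2).
Qed.

Lemma int01C_zero : int01C (fun _ _ => 0) 0.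
Proof.
  assert (Hc : is_RInt (fun _ : R => 0) 0 1 0).
  { pose proof (is_RInt_const 0 1 (0:R)) as H.
    unfold scal in H; simpl in H; unfold mult in H; simpl in H.
    rewrite Rmult_0_r in H. exact H. }
  split. intros; exists 0; exact Hc.
  eapply is_RInt_ext; [|exact Hc]. intros; simpl. symmetry. apply is_RInt_unique. exact Hc.
Qed.

Lemma inner_C u v f1 f2 c : inner_on u v f1 f2 c <->
  let g s t := hdelta (f1 (Eadd (Escal s u) (Escal t v))) (f2 (Eadd (Escal s u) (Escal t v))) in
  exists r1 r2, int01C (fun s t => fst (g s t)) r1 /\ int01C (fun s t => snd (g s t)) r2 /\
                c = Cscal (Rabs (omega u v)) (r1, r2).
Proof.
  unfold inner_on; simpl; split; intros [r1 [r2 [A [B C]]]]; exists r1, r2;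
  rewrite ?int01_C in *; rewrite <- ?int01_C in *; auto.
Qed.

Lemma inner_uniq u v f g c1 c2 : inner_on u v f g c1 -> inner_on u v f g c2 -> c1 = c2.
Proof.
  rewrite !inner_C; simpl. intros [a1 [b1 [A1 [B1 ->]]]] [a2 [b2 [A2 [B2 ->]]]].
  rewrite (int01C_uniq _ _ _ A1 A2), (int01C_uniq _ _ _ B1 B2); auto.
Qed.

Lemma inner_ext u v f g f' g' c : (forall y, f y = f' y) -> (forall y, g y = g' y) ->
  inner_on u v f g c -> inner_on u v f' g' c.
Proof.
  intros E1 E2. rewrite !inner_C; simpl. intros [a [b [A [B ->]]]].
  exists a, b. split; [|split; auto].
  - eapply int01C_ext; [|exact A]. intros; simpl. rewrite E1, E2; auto.
  - eapply int01C_ext; [|exact B]. intros; simpl. rewrite E1, E2; auto.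
Qed.

Lemma inner_lin u v f1 f2 g c1 c2 a b : inner_on u v f1 g c1 -> inner_on u v f2 g c2 ->
  inner_on u v (fun y => Cadd (Cmul a (f1 y)) (Cmul b (f2 y))) g (Cadd (Cmul a c1) (Cmul b c2)).
Proof.
  rewrite !inner_C; simpl. intros [x1 [y1 [A1 [B1 ->]]]] [x2 [y2 [A2 [B2 ->]]]].
  destruct a as [a1 a2], b as [b1 b2].
  exists (1 * (a1 * x1 + - a2 * y1) + 1 * (b1 * x2 + - b2 * y2)),
         (1 * (a2 * x1 + a1 * y1) + 1 * (b2 * x2 + b1 * y2)).
  split; [|split].
  - eapply int01C_ext; [|exact (int01C_lin _ _ _ _ 1 1 (int01C_lin _ _ _ _ a1 (-a2) A1 B1)
                                            (int01C_lin _ _ _ _ b1 (-b2) A2 B2))].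
    intros s t. unfold hdelta; cunf; simpl. ring.
  - eapply int01C_ext; [|exact (int01C_lin _ _ _ _ 1 1 (int01C_lin _ _ _ _ a2 a1 A1 B1)
                                            (int01C_lin _ _ _ _ b2 b1 A2 B2))].
    intros s t. unfold hdelta; cunf; simpl. ring.
  - cunf; simpl. f_equal; ring.
Qed.

Lemma inner_zero u v g : inner_on u v (fun _ => C0) g C0.
Proof.
  rewrite inner_C; simpl. exists 0, 0. split; [|split].
  - eapply int01C_ext; [|apply int01C_zero]. intros; unfold hdelta; cunf; simpl; ring.
  - eapply int01C_ext; [|apply int01C_zero]. intros; unfold hdelta; cunf; simpl; ring.
  - cunf; simpl; f_equal; ring.
Qed.

Lemma inner_add u v f1 f2 g c1 c2 : inner_on u v f1 g c1 -> inner_on u v f2 g c2 ->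
  inner_on u v (fun y => Cadd (f1 y) (f2 y)) g (Cadd c1 c2).
Proof.
  intros A B. generalize (inner_lin _ _ _ _ _ _ _ C1 C1 A B). rewrite !Cmul_1l.
  apply inner_ext; intros; rewrite ?Cmul_1l; auto.
Qed.

Lemma inner_cmul u v f g c a : inner_on u v f g c ->
  inner_on u v (fun y => Cmul a (f y)) g (Cmul a c).
Proof.
  intros A. generalize (inner_lin _ _ _ _ _ _ _ a C0 A A). rewrite Cmul_0l, Cadd_0r.
  apply inner_ext; intros; rewrite ?Cmul_0l, ?Cadd_0r; auto.
Qed.

Lemma inner_sub u v f1 f2 g c1 c2 : inner_on u v f1 g c1 -> inner_on u v f2 g c2 ->
  inner_on u v (fun y => Csub (f1 y) (f2 y)) g (Csub c1 c2).
Proof.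
  intros A B. replace (Csub c1 c2) with (Cadd (Cmul C1 c1) (Cmul (Copp C1) c2)) by ceq.
  generalize (inner_lin _ _ _ _ _ _ _ C1 (Copp C1) A B).
  apply inner_ext; intros; auto. ceq.
Qed.

Lemma inner_Slin u v c f g val n :
  (forall i, (0 <= i < Z.of_nat n)%Z -> inner_on u v (f i) g (val i)) ->
  inner_on u v (Slin c f n) g (Csum (fun i => Cmul (c i) (val i)) n).
Proof.
  induction n; intros H; unfold Slin in *; simpl.
  - apply inner_zero.
  - apply inner_add.
    + apply IHn. intros; apply H; lia.
    + apply inner_cmul, H; lia.
Qed.

Lemma Cnorm_Cmod z : Cnorm z = Cmod z.
Proof. unfold Cnorm, Cmod. f_equal. simpl. ring. Qed.
Lemma Cnorm_ge0 z : 0 <= Cnorm z.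
Proof. unfold Cnorm. apply sqrt_pos. Qed.
Lemma Cnorm_add z w : Cnorm (Cadd z w) <= Cnorm z + Cnorm w.
Proof. rewrite !Cnorm_Cmod. apply Cmod_triangle. Qed.
Lemma Cnorm_mul z w : Cnorm (Cmul z w) = Cnorm z * Cnorm w.
Proof. rewrite !Cnorm_Cmod. apply Cmod_mult. Qed.

Definition negE (y : E) : E := (- fst y, - snd y).
Definition Par (f : Sec) : Sec := fun y => f (negE y).

Lemma negE_negE y : negE (negE y) = y.
Proof. destruct y; unfold negE; simpl; f_equal; ring. Qed.

Lemma diff_at_add f g p dx dy ex ey : diff_at f p dx dy -> diff_at g p ex ey ->
  diff_at (fun y => Cadd (f y) (g y)) p (Cadd dx ex) (Cadd dy ey).
Proof.
  intros Hf Hg eps Heps.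
  destruct (Hf (eps/2)) as [d1 [Hd1 H1]]; [lra|].
  destruct (Hg (eps/2)) as [d2 [Hd2 H2]]; [lra|].
  assert (Hm : 0 < Rmin d1 d2) by (apply Rmin_pos; auto).
  exists (Rmin d1 d2). split; auto. intros h1 h2 Hh.
  assert (A1 : h1 * h1 + h2 * h2 < d1 * d1)
    by (generalize (Rmin_l d1 d2); intros; nra).
  assert (A2 : h1 * h1 + h2 * h2 < d2 * d2)
    by (generalize (Rmin_r d1 d2); intros; nra).
  specialize (H1 _ _ A1). specialize (H2 _ _ A2).
  match goal with |- Cnorm ?X <= _ => replace X with
    (Cadd (Csub (Csub (f (fst p + h1, snd p + h2)) (f p)) (Cadd (Cscal h1 dx) (Cscal h2 dy)))
          (Csub (Csub (g (fst p + h1, snd p + h2)) (g p)) (Cadd (Cscal h1 ex) (Cscal h2 ey))))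
    by ceq end.
  eapply Rle_trans. apply Cnorm_add. lra.
Qed.

Lemma diff_at_cmul f p dx dy a : diff_at f p dx dy ->
  diff_at (fun y => Cmul a (f y)) p (Cmul a dx) (Cmul a dy).
Proof.
  intros Hf eps Heps.
  assert (Ha0 : 0 <= Cnorm a) by apply Cnorm_ge0.
  destruct (Hf (eps / (Cnorm a + 1))) as [d [Hd H]]. apply Rdiv_lt_0_compat; lra.
  exists d; split; auto. intros h1 h2 Hh. specialize (H _ _ Hh).
  match goal with |- Cnorm ?X <= _ => replace X with
    (Cmul a (Csub (Csub (f (fst p + h1, snd p + h2)) (f p)) (Cadd (Cscal h1 dx) (Cscal h2 dy))))
    by ceq end.
  rewrite Cnorm_mul.
  set (N := Cnorm (Csub _ _)) in *. set (S := sqrt _) in *.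
  assert (0 <= N) by apply Cnorm_ge0. assert (0 <= S) by apply sqrt_pos.
  apply Rle_trans with (Cnorm a * (eps / (Cnorm a + 1) * S)).
  - apply Rmult_le_compat_l; auto.
  - replace (Cnorm a * (eps / (Cnorm a + 1) * S)) with (eps * S * (Cnorm a / (Cnorm a + 1)))
      by (field; lra).
    assert (Cnorm a / (Cnorm a + 1) <= 1).
    { apply Rmult_le_reg_r with (Cnorm a + 1); [lra|].
      unfold Rdiv; rewrite Rmult_assoc, Rinv_l; lra. }
    assert (0 <= eps * S) by nra. nra.
Qed.

Lemma diff_at_Par f p dx dy :
  diff_at f (negE p) dx dy -> diff_at (Par f) p (Copp dx) (Copp dy).
Proof.
  intros Hf eps Heps. destruct (Hf eps Heps) as [d [Hd H]]. exists d; split; auto.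
  intros h1 h2 Hh. specialize (H (-h1) (-h2)). unfold Par.
  replace (negE (fst p + h1, snd p + h2)) with (fst (negE p) + - h1, snd (negE p) + - h2)
    by (unfold negE; simpl; f_equal; ring).
  replace (sqrt (h1 * h1 + h2 * h2)) with (sqrt (- h1 * - h1 + - h2 * - h2)) by (f_equal; ring).
  match goal with |- Cnorm ?X <= _ => replace X with
    (Csub (Csub (f (fst (negE p) + - h1, snd (negE p) + - h2)) (f (negE p)))
          (Cadd (Cscal (-h1) dx) (Cscal (-h2) dy))) by ceq end.
  apply H. lra.
Qed.

Lemma diff_at_zero p : diff_at (fun _ => C0) p C0 C0.
Proof.
  intros eps Heps. exists 1; split; [lra|]. intros h1 h2 _.
  replace (Csub (Csub C0 C0) (Cadd (Cscal h1 C0) (Cscal h2 C0))) with C0 by ceq.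
  unfold Cnorm, C0; simpl. replace (0 * 0 + 0 * 0) with 0 by ring. rewrite sqrt_0.
  apply Rmult_le_pos; [lra| apply sqrt_pos].
Qed.

Lemma diff_at_ext f g p dx dy : (forall y, f y = g y) -> diff_at f p dx dy -> diff_at g p dx dy.
Proof.
  intros E H eps He. destruct (H eps He) as [d [Hd H']].
  exists d; split; auto. intros. rewrite <- !E. auto.
Qed.

(* Holomorphic sections form a vector space stable under parity: the
   Cauchy-Riemann type equation  dx + i dy + (k/2) z f = 0  is odd in y. *)
Lemma holo_ext k f g : (forall y, f y = g y) -> holo k f -> holo k g.
Proof.
  intros E H p. destruct (H p) as [dx [dy [Hd Q]]]. exists dx, dy. split.
  - eapply diff_at_ext; eauto.
  - rewrite <- E; auto.
Qed.

Lemma holo_add k f g : holo k f -> holo k g -> holo k (fun y => Cadd (f y) (g y)).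
Proof.
  intros Hf Hg p. destruct (Hf p) as [dx [dy [Hd Q]]]. destruct (Hg p) as [ex [ey [He Q']]].
  exists (Cadd dx ex), (Cadd dy ey). split. apply diff_at_add; auto.
  revert Q Q'. generalize (f p) (g p) (dz p). intros. cdes. unfold C0 in *. cunf. simpl in *.
  injection Q; injection Q'; intros. f_equal; nra.
Qed.

Lemma holo_cmul k f a : holo k f -> holo k (fun y => Cmul a (f y)).
Proof.
  intros Hf p. destruct (Hf p) as [dx [dy [Hd Q]]].
  exists (Cmul a dx), (Cmul a dy). split. apply diff_at_cmul; auto.
  revert Q. generalize (f p) (dz p). intros. cdes. unfold C0 in *. cunf. simpl in *.
  injection Q; intros. f_equal; nra.
Qed.

Lemma holo_Slin k c f n : (forall i, holo k (f i)) -> holo k (Slin c f n).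
Proof.
  intros H. induction n; unfold Slin; simpl.
  - intros p. exists C0, C0. split. apply diff_at_zero. ceq.
  - apply holo_add. apply IHn. apply holo_cmul, H.
Qed.

Lemma holo_Par k f : holo k f -> holo k (Par f).
Proof.
  intros Hf p. destruct (Hf (negE p)) as [dx [dy [Hd Q]]].
  exists (Copp dx), (Copp dy). split. apply diff_at_Par; auto.
  unfold Par. revert Q. unfold dz, negE. simpl. generalize (f (- fst p, - snd p)).
  intros. cdes. unfold C0 in *. cunf. simpl in *. injection Q; intros. f_equal; nra.
Qed.

Lemma Tstar_ext k x f g y : (forall z, f z = g z) -> Tstar k x f y = Tstar k x g y.
Proof. intros E; unfold Tstar; rewrite E; auto. Qed.

Lemma Tstar_Par k x f y : Tstar k x (Par f) y = Tstar k (negE x) f (negE y).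
Proof.
  unfold Tstar, Par, negE, omega, Eadd; simpl. f_equal.
  - f_equal. ring.
  - f_equal; f_equal; ring.
Qed.

Lemma Tstar_inv k x f y : Tstar k (negE x) (Tstar k x f) y = f y.
Proof.
  unfold Tstar, negE, Eadd, omega; simpl.
  replace (fst x + (- fst x + fst y), snd x + (- snd x + snd y)) with y
    by (destruct y; simpl; f_equal; ring).
  rewrite <- Cmul_assoc, <- cis_add.
  replace (- (INR k / 2) * (- fst x * snd y - - snd x * fst y) +
     - (INR k / 2) * (fst x * (- snd x + snd y) - snd x * (- fst x + fst y))) with 0 by ring.
  rewrite cis_0. apply Cmul_1l.
Qed.

Lemma Tstar_Slin k x c f n y :
  Tstar k x (Slin c f n) y = Slin c (fun i => Tstar k x (f i)) n y.
Proof. unfold Slin, Tstar. rewrite <- Csum_cmul. apply Csum_ext. intros. ceq. Qed.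

Lemma in_H_ext k u v f g : (forall y, f y = g y) -> in_H k u v f -> in_H k u v g.
Proof.
  intros E [H1 H2]. split. eapply holo_ext; eauto.
  intros m n y. rewrite <- E, <- (H2 m n y). apply Tstar_ext. auto.
Qed.

Lemma in_H_Slin k u v c f n : (forall i, in_H k u v (f i)) -> in_H k u v (Slin c f n).
Proof.
  intros H. split. apply holo_Slin; intros; apply H.
  intros m n' y. rewrite Tstar_Slin. unfold Slin. apply Csum_ext. intros. f_equal. apply H.
Qed.

Lemma in_H_Par k u v f : in_H k u v f -> in_H k u v (Par f).
Proof.
  intros [Hh Hi]. split. apply holo_Par; auto.
  intros m n y. rewrite Tstar_Par.
  replace (negE (Eadd (Escal (IZR m) u) (Escal (IZR n) v)))
    with (Eadd (Escal (IZR (- m)) u) (Escal (IZR (- n)) v))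
    by (unfold negE, Eadd, Escal; simpl; rewrite !opp_IZR; f_equal; ring).
  apply Hi.
Qed.

Lemma in_H_sublattice k D lam mu f : in_H k lam mu f -> in_H k (Escal (INR D) mu) lam f.
Proof.
  intros [H1 H2]. split; auto. intros m n y.
  rewrite <- (H2 n (m * Z.of_nat D)%Z y). unfold Tstar. f_equal.
  - do 2 f_equal. unfold omega, Eadd, Escal; simpl. rewrite mult_IZR, <- INR_IZR_INZ. ring.
  - f_equal. unfold Eadd, Escal; simpl. rewrite mult_IZR, <- INR_IZR_INZ. f_equal; ring.
Qed.

Definition is_ONB (k : nat) (u v : E) (b : Z -> Sec) (N : nat) : Prop :=
  (forall i j, (0 <= i < Z.of_nat N)%Z -> (0 <= j < Z.of_nat N)%Z ->
     inner_on u v (b i) (b j) (kron (Z.eqb i j))) /\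
  (forall f, in_H k u v f -> exists c, forall y, f y = Slin c b N y).

Lemma kron_sum (a : Z -> Cplx) n j : (0 <= j < Z.of_nat n)%Z ->
  Csum (fun i => Cmul (a i) (kron (Z.eqb i j))) n = a j.
Proof.
  intros Hj. rewrite (Csum_single _ _ j Hj).
  - rewrite Z.eqb_refl. apply Cmul_1r.
  - intros i _ Hi. apply Z.eqb_neq in Hi. rewrite Hi. apply Cmul_0r.
Qed.

Lemma inner_coef k u v b N c j : is_ONB k u v b N -> (0 <= j < Z.of_nat N)%Z ->
  inner_on u v (Slin c b N) (b j) (c j).
Proof.
  intros [O _] Hj. rewrite <- (kron_sum c N j Hj). apply inner_Slin. intros; apply O; auto.
Qed.

Lemma Slin_zero_coef k u v b N c : is_ONB k u v b N -> (forall y, Slin c b N y = C0) ->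
  forall j, (0 <= j < Z.of_nat N)%Z -> c j = C0.
Proof.
  intros HB H j Hj. eapply inner_uniq.
  - apply (inner_coef k u v b N c j HB Hj).
  - eapply inner_ext; [| |apply inner_zero]; intros; auto.
Qed.

Section EigenBasis.
Variables (k : nat) (u v x : E) (b : Z -> Sec) (N : nat) (theta : Z -> R).
Hypothesis HB : is_ONB k u v b N.
Hypothesis Hin : forall i, in_H k u v (b i).
Hypothesis Heig : forall i y, Tstar k x (b i) y = Cmul (cis (theta i)) (b i y).
Hypothesis Htheta0 : theta 0%Z = 0.
Hypothesis Hsimple : forall i, (0 < i < Z.of_nat N)%Z -> cis (theta i) <> C1.
Hypothesis HN : (0 < N)%nat.
Hypothesis Hb0 : b 0%Z (0, 0) <> C0.

Lemma fixed_space_line f : in_H k u v f -> (forall y, Tstar k x f y = f y) ->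
  exists c0, forall y, f y = Cmul c0 (b 0%Z y).
Proof.
  intros Hf Hfix. destruct (proj2 HB f Hf) as [c Hc].
  assert (Zero : forall y, Slin (fun i => Cmul (c i) (Csub (cis (theta i)) C1)) b N y = C0).
  { intros y. generalize (Hfix y). rewrite (Tstar_ext _ _ _ _ _ Hc), Tstar_Slin, Hc.
    unfold Slin. intros E.
    transitivity (Csub (Csum (fun i => Cmul (c i) (Tstar k x (b i) y)) N)
                       (Csum (fun i => Cmul (c i) (b i y)) N)).
    - unfold Csub at 2. rewrite <- Csum_opp, <- Csum_add. apply Csum_ext. intros. rewrite Heig. ceq.
    - rewrite E. ceq. }
  assert (Hc0 : forall j, (0 < j < Z.of_nat N)%Z -> c j = C0).
  { intros j Hj. assert (H := Slin_zero_coef k u v b N _ HB Zero j ltac:(lia)).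
    apply Cmul_eq0 in H; auto. intros H'. apply (Hsimple j Hj). apply Csub_eq0; auto. }
  exists (c 0%Z). intros y. rewrite Hc. unfold Slin.
  apply (Csum_single (fun i => Cmul (c i) (b i y)) N 0%Z); [lia|].
  intros i Hi Hi0. rewrite Hc0 by lia. apply Cmul_0l.
Qed.

Lemma basis_zero_even : forall y, b 0%Z (negE y) = b 0%Z y.
Proof.
  assert (Fix0 : forall y, Tstar k x (b 0%Z) y = b 0%Z y).
  { intros; rewrite Heig, Htheta0, cis_0; apply Cmul_1l. }
  destruct (fixed_space_line (Par (b 0%Z))) as [c0 Hc0].
  - apply in_H_Par; auto.
  - intros y. rewrite Tstar_Par. unfold Par.
    rewrite <- (Tstar_inv k x (b 0%Z) (negE y)).
    apply Tstar_ext. intros; symmetry; apply Fix0.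
  - assert (Hc1 : c0 = C1).
    { generalize (Hc0 (0,0)). unfold Par, negE; simpl. rewrite Ropp_0. intros E.
      assert (Cmul (Csub c0 C1) (b 0%Z (0,0)) = C0).
      { transitivity (Csub (Cmul c0 (b 0%Z (0,0))) (b 0%Z (0,0))). ceq. rewrite <- E. ceq. }
      apply Csub_eq0, (Cmul_eq0 _ _ H Hb0). }
    subst. intros y. generalize (Hc0 y). unfold Par. rewrite Cmul_1l. auto.
Qed.
End EigenBasis.

(* If b_0 is even and a translation shifts the index by delta = +-1, then
   P b_i = b_{-i} for all i (induction on i, using P T*_w P = T*_{-w}). *)
Lemma parity_basis k b w (delta : Z) :
  (delta = 1 \/ delta = -1)%Z ->
  (forall i y, Tstar k w (b i) y = b (i + delta)%Z y) ->
  (forall y, b 0%Z (negE y) = b 0%Z y) ->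
  forall i y, b i (negE y) = b (- i)%Z y.
Proof.
  intros Hd Hsh H0.
  assert (Step : forall i, (forall y, b i (negE y) = b (- i)%Z y) ->
                           (forall y, b (i + delta)%Z (negE y) = b (- (i + delta))%Z y)).
  { intros i Hi y. rewrite <- Hsh.
    transitivity (Tstar k (negE w) (Par (b i)) y).
    - rewrite Tstar_Par, negE_negE. auto.
    - transitivity (Tstar k (negE w) (Tstar k w (b (- (i + delta))%Z)) y).
      + apply Tstar_ext. intros z. unfold Par. rewrite Hi, Hsh. f_equal. lia.
      + apply Tstar_inv. }
  assert (Nat : forall n : nat, forall y,
             b (Z.of_nat n * delta)%Z (negE y) = b (- (Z.of_nat n * delta))%Z y).
  { induction n.
    - simpl. intros; rewrite H0; auto.
    - intros y. replace (Z.of_nat (S n) * delta)%Z with (Z.of_nat n * delta + delta)%Z by lia.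
      apply Step. auto. }
  intros i y. destruct (Z_le_gt_dec 0 (i * delta)) as [H|H].
  - replace i with (Z.of_nat (Z.to_nat (i * delta)) * delta)%Z by (destruct Hd; subst; lia).
    apply Nat.
  - replace i with (- (Z.of_nat (Z.to_nat (- (i * delta))) * delta))%Z
      by (destruct Hd; subst; lia).
    rewrite Z.opp_involutive, <- Nat, negE_negE. reflexivity.
Qed.

Section JonesExponents.
Local Open Scope Z_scope.

(* k = g h with g, h coprime, h prime to A and g prime to B (induction on k,
   pulling the common factors of k and A into g). *)
Lemma coprime_split (A B : Z) : rel_prime A B -> forall m : nat, forall n, 1 <= n <= Z.of_nat m ->
  exists g h, n = g * h /\ 1 <= g /\ 1 <= h /\ rel_prime h A /\ rel_prime g B /\ rel_prime g h.
Proof.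
  intros HAB m. induction m; intros n Hn. lia.
  destruct (Z.eq_dec (Z.gcd n A) 1) as [E|E].
  - exists 1, n. split; [lia|split; [lia|split; [lia|split; [|split]]]].
    + apply Zgcd_1_rel_prime; auto.
    + apply rel_prime_1.
    + apply rel_prime_1.
  - set (p := Z.gcd n A) in *.
    assert (Hp0 : 0 <= p) by apply Z.gcd_nonneg.
    destruct (Z.gcd_divide_l n A) as [n1 Hn1]. fold p in Hn1.
    assert (Hp : 1 < p) by (destruct (Z.eq_dec p 0) as [E0|]; [rewrite E0 in Hn1; lia| lia]).
    assert (Hn1b : 1 <= n1 <= Z.of_nat m) by nia.
    destruct (IHm n1 Hn1b) as [g1 [h1 [E1 [G1 [H1 [R1 [R2 R3]]]]]]].
    assert (pA : (p | A)) by apply Z.gcd_divide_r.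
    exists (p * g1), h1. split; [nia|split; [nia|split; [lia|split; [auto|split]]]].
    + apply rel_prime_sym, rel_prime_mult; apply rel_prime_sym; auto.
      apply (rel_prime_div A B p); auto.
    + apply rel_prime_sym, rel_prime_mult; apply rel_prime_sym; auto.
      apply (rel_prime_div A h1 p); auto. apply rel_prime_sym; auto.
Qed.

Definition jones_exp1 (A B s : Z) : Z := A * B * s * s - 2 * (A + B) * s + 2.
Definition jones_exp2 (A B s : Z) : Z := A * B * s * s - 2 * (A - B) * s - 2.

Lemma jones_exp1_shift A B s m :
  jones_exp1 A B (s + 2 * m) = jones_exp1 A B s + 4 * (A * B * s * m + A * B * m * m - (A + B) * m).
Proof. unfold jones_exp1; ring. Qed.
Lemma jones_exp2_shift A B s m :
  jones_exp2 A B (s + 2 * m) = jones_exp2 A B s + 4 * (A * B * s * m + A * B * m * m - (A - B) * m).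
Proof. unfold jones_exp2; ring. Qed.

Lemma jones_exponent_swap (A B k : Z) : 1 <= A -> 1 <= B -> 1 <= k -> rel_prime A B ->
  exists u d, (exists w, u * u - 1 = 2 * k * w) /\ (exists w, u = 2 * w + 1) /\
    forall s, exists q, jones_exp2 A B (u * s + 2 * d) - jones_exp1 A B s = 4 * k * q.
Proof.
  intros HA HB Hk HAB.
  destruct (coprime_split A B HAB (Z.to_nat k) k ltac:(lia))
    as [g [h [Ek [Hg [Hh [RhA [RgB Rgh]]]]]]].
  destruct (rel_prime_bezout _ _ Rgh) as [x y Bxy].
  destruct (rel_prime_bezout _ _ (rel_prime_sym _ _ RhA)) as [a' h2 Ba].
  destruct (rel_prime_bezout _ _ (rel_prime_sym _ _ RgB)) as [b' g2 Bb].
  set (u := 2 * x * g - 1). set (d := b' * y * h - a' * x * g).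
  assert (Hu1 : u + 1 = 2 * x * g) by (subst u; ring).
  assert (Hu2 : u - 1 = - 2 * y * h) by (subst u; lia).
  exists u, d. split; [|split].
  - exists (- 2 * x * y). replace (u * u - 1) with ((u + 1) * (u - 1)) by ring.
    rewrite Hu1, Hu2, Ek. ring.
  - exists (x * g - 1). subst u; ring.
  - intros s.
    set (E' := A * b' * y + y + h2 * x * g).
    set (F' := - x - g2 * y * h - B * a' * x).
    assert (He : A * d + 1 = h * E').
    { subst d E'.
      match goal with |- ?L = ?R => replace L with
        (R + (a' * A + h2 * h - 1) * (- x * g) + (x * g + y * h - 1) * (-1)) by ring end.
      replace (a' * A + h2 * h - 1) with 0 by lia. replace (x * g + y * h - 1) with 0 by lia.
      ring. }
    assert (Hf : B * d - 1 = g * F').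
    { subst d F'.
      match goal with |- ?L = ?R => replace L with
        (R + (b' * B + g2 * g - 1) * (y * h) + (x * g + y * h - 1) * 1) by ring end.
      replace (b' * B + g2 * g - 1) with 0 by lia. replace (x * g + y * h - 1) with 0 by lia.
      ring. }
    exists (A * B * (- x * y) * s * s + (x * B * E' - y * A * F') * s + E' * F').
    assert (ID : jones_exp2 A B (u * s + 2 * d) - jones_exp1 A B s =
       A * B * ((u + 1) * (u - 1)) * s * s
       + 2 * ((u + 1) * B * (A * d + 1) + (u - 1) * A * (B * d - 1)) * s
       + 4 * (A * d + 1) * (B * d - 1)).
    { unfold jones_exp1, jones_exp2. ring. }
    rewrite ID, He, Hf, Hu1, Hu2, Ek. ring.
Qed.

Lemma mod_cong x y N : 0 < N -> x mod N = y mod N -> exists q, x = y + N * q.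
Proof.
  intros HN E. exists (x / N - y / N).
  pose proof (Z.div_mod x N ltac:(lia)). pose proof (Z.div_mod y N ltac:(lia)).
  rewrite Z.mul_sub_distr_l. lia.
Qed.

Lemma opp_mod_mod x N : 0 < N -> (- (x mod N)) mod N = (- x) mod N.
Proof.
  intros HN. rewrite (Z.div_mod x N) at 2 by lia.
  replace (- (N * (x / N) + x mod N)) with (- (x mod N) + (- (x / N)) * N) by ring.
  symmetry; apply Z_mod_plus_full.
Qed.

Lemma affine_mod_inj M u w al i j : 0 < M -> u * u - 1 = M * w ->
  0 <= i < M -> 0 <= j < M -> (al + u * i) mod M = (al + u * j) mod M -> i = j.
Proof.
  intros HM Hw Hi Hj E. destruct (mod_cong _ _ _ HM E) as [t Ht].
  assert (E' : i - j = M * (u * t - w * (i - j))).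
  { transitivity (u * (u * (i - j)) - (u * u - 1) * (i - j)). ring.
    replace (u * (i - j)) with (M * t) by lia. rewrite Hw. ring. }
  set (m := u * t - w * (i - j)) in *.
  destruct (Z_lt_le_dec m 0); [|destruct (Z_lt_le_dec 0 m)]; nia.
Qed.
End JonesExponents.

Lemma tpow_add k m1 m2 : tpow k (m1 + m2) = Cmul (tpow k m1) (tpow k m2).
Proof. unfold tpow. rewrite <- cis_add, plus_IZR. f_equal. ring. Qed.

Lemma tpow_cong k m1 m2 q : (1 <= k)%nat ->
  (m1 = m2 + 4 * Z.of_nat k * q)%Z -> tpow k m1 = tpow k m2.
Proof.
  intros Hk ->. unfold tpow. rewrite plus_IZR, !mult_IZR, <- INR_IZR_INZ.
  assert (INR k <> 0) by (apply not_0_INR; lia).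
  replace (PI * (1 + / (2 * INR k)) * (IZR m2 + 4 * INR k * IZR q)) with
     (PI * (1 + / (2 * INR k)) * IZR m2 + 2 * PI * IZR ((2 * Z.of_nat k + 1) * q)).
  - apply cis_2piZ.
  - rewrite mult_IZR, plus_IZR, mult_IZR, <- INR_IZR_INZ. field; auto.
Qed.

Definition jones_term (A B : Z) (k : nat) (s : Z) : Cplx :=
  Cmul (tpow k (A * B * s * s)%Z)
       (Csub (tpow k (- 2 * (A + B) * s + 2)%Z) (tpow k (- 2 * (A - B) * s - 2)%Z)).

Lemma jones_term_exps A B k s :
  jones_term A B k s = Csub (tpow k (jones_exp1 A B s)) (tpow k (jones_exp2 A B s)).
Proof.
  unfold jones_term.
  replace (jones_exp1 A B s) with (A * B * s * s + (- 2 * (A + B) * s + 2))%Z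
    by (unfold jones_exp1; ring).
  replace (jones_exp2 A B s) with (A * B * s * s + (- 2 * (A - B) * s - 2))%Z
    by (unfold jones_exp2; ring).
  rewrite !tpow_add. ceq.
Qed.

Lemma jones_term_periodic A B k s q : (1 <= k)%nat ->
  jones_term A B k (s + 2 * Z.of_nat k * q) = jones_term A B k s.
Proof.
  intros Hk. rewrite !jones_term_exps.
  replace (s + 2 * Z.of_nat k * q)%Z with (s + 2 * (Z.of_nat k * q))%Z by ring.
  f_equal.
  - apply tpow_cong with (q := (A * B * s * q + A * B * (Z.of_nat k * q) * q - (A + B) * q)%Z);
      auto. rewrite jones_exp1_shift. ring.
  - apply tpow_cong with (q := (A * B * s * q + A * B * (Z.of_nat k * q) * q - (A - B) * q)%Z);
      auto. rewrite jones_exp2_shift. ring.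
Qed.

(* The sum of the summands over a full period vanishes: the permutation
   j |-> (al + u j) mod 2k of the summation index carries the sum of the
   t^{exp2} onto the sum of the t^{exp1}. *)
Lemma jones_full_sum A B k p0 : (1 <= A)%Z -> (1 <= B)%Z -> (1 <= k)%nat -> rel_prime A B ->
  Csum (fun j => jones_term A B k (p0 + 2 * j)) (2 * k) = C0.
Proof.
  intros HA HB Hk HAB.
  destruct (jones_exponent_swap A B (Z.of_nat k) HA HB ltac:(lia) HAB)
    as [u [d [[w1 Hw1] [[w Hw] Hq]]]].
  set (K2 := (2 * Z.of_nat k)%Z).
  set (al := (w * p0 + d)%Z).
  set (sg := fun j => ((al + u * j) mod K2)%Z).
  assert (HK2 : (0 < K2)%Z) by (unfold K2; lia).
  assert (Perm : Csum (fun j => tpow k (jones_exp2 A B (p0 + 2 * sg j))) (2 * k)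
               = Csum (fun j => tpow k (jones_exp2 A B (p0 + 2 * j))) (2 * k)).
  { apply (Csum_perm (fun j => tpow k (jones_exp2 A B (p0 + 2 * j))) sg).
    - intros i _. unfold sg. rewrite Nat2Z.inj_mul. apply Z.mod_pos_bound. lia.
    - intros i j Hi Hj. rewrite Nat2Z.inj_mul in Hi, Hj.
      apply (affine_mod_inj K2 u w1); auto. }
  assert (Swap : forall j, tpow k (jones_exp2 A B (p0 + 2 * sg j))
                         = tpow k (jones_exp1 A B (p0 + 2 * j))).
  { intros j. destruct (Hq (p0 + 2 * j)%Z) as [q Hqq].
    set (m := ((al + u * j) / K2)%Z).
    assert (Hs : (p0 + 2 * sg j = (u * (p0 + 2 * j) + 2 * d) + 2 * (- (2 * Z.of_nat k * m)))%Z).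
    { unfold sg. rewrite (Z.mod_eq (al + u * j) K2) by lia. fold m. unfold al, K2. rewrite Hw. ring. }
    rewrite Hs, jones_exp2_shift.
    apply tpow_cong with (q := (q + A * B * (u * (p0 + 2 * j) + 2 * d) * (-2 * m) +
       A * B * Z.of_nat k * 4 * m * m + (A - B) * 2 * m)%Z); auto.
    replace (jones_exp2 A B (u * (p0 + 2 * j) + 2 * d))
      with (jones_exp1 A B (p0 + 2 * j) + 4 * Z.of_nat k * q)%Z by lia.
    ring. }
  rewrite (Csum_ext _ (fun j => Cadd (tpow k (jones_exp1 A B (p0 + 2 * j)))
                                     (Copp (tpow k (jones_exp2 A B (p0 + 2 * j))))))
    by (intros; apply jones_term_exps).
  rewrite Csum_add, Csum_opp, <- Perm, (Csum_ext _ _ _ (fun j _ => Swap j)).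
  ceq.
Qed.

Lemma nat_rel_prime a b : (0 < a)%nat -> Nat.gcd a b = 1%nat ->
  rel_prime (Z.of_nat a) (Z.of_nat b).
Proof.
  intros Ha Hg. destruct (Nat.gcd_bezout_pos a b Ha) as [u [v Huv]]. rewrite Hg in Huv.
  apply bezout_rel_prime. apply (Bezout_intro _ _ _ (Z.of_nat u) (- Z.of_nat v)). lia.
Qed.

Lemma Jval_succ a b k n : Jval a b k (S n) =
  Cdiv (Cmul (tpow k (Z.of_nat a * Z.of_nat b * (1 - Z.of_nat (S n) * Z.of_nat (S n)))%Z)
             (Csum (fun j => jones_term (Z.of_nat a) (Z.of_nat b) k
                               (2 * j - (Z.of_nat (S n) - 1))%Z) (S n)))
       (Csub (tpow k 2%Z) (tpow k (-2)%Z)).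
Proof. reflexivity. Qed.

Lemma Jval_reflection a b k l l' : (0 < a)%nat -> (0 < b)%nat -> Nat.gcd a b = 1%nat ->
  (1 <= k)%nat -> (1 <= l)%nat -> (1 <= l')%nat -> (l + l' = 2 * k)%nat ->
  Jval a b k l' = Copp (Jval a b k l).
Proof.
  intros Ha Hb Hg Hk Hl Hl' Hs.
  assert (HAB := nat_rel_prime a b Ha Hg).
  destruct l as [|n]; [lia|]. destruct l' as [|n']; [lia|].
  rewrite !Jval_succ.
  set (A := Z.of_nat a). set (B := Z.of_nat b).
  set (L := Z.of_nat (S n)). set (L' := Z.of_nat (S n')).
  assert (EL : (L' = 2 * Z.of_nat k - L)%Z) by (unfold L, L'; lia).
  assert (Prefactor : tpow k (A * B * (1 - L' * L'))%Z = tpow k (A * B * (1 - L * L))%Z).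
  { apply tpow_cong with (q := (A * B * (L - Z.of_nat k))%Z); auto. rewrite EL. ring. }
  assert (Full : Csum (fun j => jones_term A B k (2 * j - (L - 1))%Z) (S n + S n') = C0).
  { rewrite Hs, <- (jones_full_sum A B k (1 - L)); try lia; auto.
    apply Csum_ext; intros; f_equal; ring. }
  rewrite Csum_split in Full.
  assert (Tail : Csum (fun j => jones_term A B k (2 * j - (L' - 1))%Z) (S n') =
                 Csum (fun i => jones_term A B k (2 * (i + Z.of_nat (S n)) - (L - 1))%Z) (S n')).
  { apply Csum_ext. intros i _. rewrite <- (jones_term_periodic A B k _ 1 Hk).
    f_equal. rewrite EL. unfold L. ring. }
  rewrite Prefactor, Tail, (Cadd_eq0 _ _ (eq_trans (Cadd_comm _ _) Full)).
  unfold Cdiv. generalize (Cinv (Csub (tpow k 2%Z) (tpow k (-2)%Z))). intros. ceq.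
Qed.

Definition ew (D : nat) (x : Z) : Cplx := cis (2 * PI * IZR x / INR D).

Lemma ew_add D x y : ew D (x + y) = Cmul (ew D x) (ew D y).
Proof. unfold ew. rewrite <- cis_add, plus_IZR. f_equal. unfold Rdiv; ring. Qed.

Lemma ew_periodic D x q : (0 < D)%nat -> ew D (x + Z.of_nat D * q) = ew D x.
Proof.
  intros HD. unfold ew. rewrite plus_IZR, mult_IZR, <- INR_IZR_INZ.
  assert (INR D <> 0) by (apply not_0_INR; lia).
  replace (2 * PI * (IZR x + INR D * IZR q) / INR D)
    with (2 * PI * IZR x / INR D + 2 * PI * IZR q) by (field; auto).
  apply cis_2piZ.
Qed.

Lemma ew_ne1 D x : (0 < D)%nat -> (0 < x < Z.of_nat D)%Z -> ew D x <> C1.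
Proof.
  intros HD Hx. unfold ew. apply cis_ne1.
  assert (HDr : 0 < INR D) by (apply lt_0_INR; lia).
  assert (H0 : 0 < IZR x) by (apply IZR_lt; lia).
  assert (H1 : IZR x < INR D) by (rewrite INR_IZR_INZ; apply IZR_lt; lia).
  assert (Hpi := PI_RGT_0). split.
  - apply Rdiv_lt_0_compat; nra.
  - apply Rmult_lt_reg_r with (INR D); auto. unfold Rdiv.
    rewrite Rmult_assoc, Rinv_l by lra. nra.
Qed.

Lemma Csum_shift1 g n :
  Csum (fun i => g (i + 1)%Z) n = Cadd (Csub (Csum g n) (g 0%Z)) (g (Z.of_nat n)).
Proof.
  induction n; simpl Csum. ceq.
  rewrite IHn. replace (Z.of_nat n + 1)%Z with (Z.of_nat (S n)) by lia.
  generalize (Csum g n) (g 0%Z) (g (Z.of_nat n)) (g (Z.of_nat (S n))). intros. ceq.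
Qed.

(* Geometric sums: sum over D consecutive i of e^{2 i pi (m0 + i) x / D} is 0
   unless D divides x (the sum is invariant under multiplication by ew D x). *)
Lemma geom_sum D m0 x : (0 < D)%nat -> (- Z.of_nat D < x < Z.of_nat D)%Z -> x <> 0%Z ->
  Csum (fun i => ew D ((m0 + i) * x)) D = C0.
Proof.
  intros HD Hx Hx0. set (S := Csum (fun i => ew D ((m0 + i) * x)) D).
  assert (Inv : Cmul S (ew D x) = S).
  { unfold S. rewrite Cmul_comm, <- Csum_cmul.
    transitivity (Csum (fun i => ew D ((m0 + (i + 1)) * x)) D).
    { apply Csum_ext; intros. rewrite <- ew_add. f_equal. ring. }
    rewrite (Csum_shift1 (fun i => ew D ((m0 + i) * x))).
    replace ((m0 + Z.of_nat D) * x)%Z with ((m0 + 0) * x + Z.of_nat D * x)%Z by ring.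
    rewrite ew_periodic by auto.
    generalize (Csum (fun i => ew D ((m0 + i) * x)) D) (ew D ((m0 + 0) * x)). intros. ceq. }
  assert (Hne : ew D x <> C1).
  { destruct (Z_lt_le_dec 0 x).
    - apply ew_ne1; lia.
    - rewrite <- (ew_periodic D x 1 HD). apply ew_ne1; lia. }
  apply (Cmul_eq0 _ (Csub (ew D x) C1)).
  - transitivity (Csub (Cmul S (ew D x)) S). ceq. rewrite Inv. ceq.
  - intros H. apply Hne, Csub_eq0, H.
Qed.

Lemma dft_window_inversion D (h : Z -> Cplx) m0 : (0 < D)%nat ->
  (forall i, (0 <= i < Z.of_nat D)%Z ->
     Csum (fun l => Cmul (h l) (ew D ((m0 + i) * l))) D = C0) ->
  forall j, (0 <= j < Z.of_nat D)%Z -> h j = C0.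
Proof.
  intros HD H j Hj.
  set (F := fun i => Csum (fun l => Cmul (h l) (ew D ((m0 + i) * l))) D).
  assert (Zero : Csum (fun i => Cmul (ew D (- ((m0 + i) * j))) (F i)) D = C0).
  { apply Csum_zero. intros i Hi. unfold F. rewrite H by auto. apply Cmul_0r. }
  assert (Swap : Csum (fun i => Cmul (ew D (- ((m0 + i) * j))) (F i)) D
     = Csum (fun l => Cmul (h l) (Csum (fun i => ew D ((m0 + i) * (l - j))) D)) D).
  { transitivity (Csum (fun i => Csum (fun l => Cmul (h l) (ew D ((m0 + i) * (l - j)))) D) D).
    - apply Csum_ext. intros i _. unfold F. rewrite <- Csum_cmul. apply Csum_ext. intros l _.
      replace ((m0 + i) * (l - j))%Z with (- ((m0 + i) * j) + (m0 + i) * l)%Z by ring.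
      rewrite ew_add. ceq.
    - rewrite Csum_swap. apply Csum_ext. intros l _. rewrite Csum_cmul. reflexivity. }
  rewrite Swap, (Csum_single _ _ j Hj) in Zero.
  - assert (Diag : forall n, Csum (fun i => ew D ((m0 + i) * 0)) n = RtoC (INR n)).
    { induction n; simpl Csum. ceq.
      rewrite IHn, Z.mul_0_r. unfold ew. simpl IZR.
      replace (2 * PI * 0 / INR D) with 0 by (unfold Rdiv; ring).
      rewrite cis_0, S_INR. ceq. }
    rewrite Z.sub_diag, Diag in Zero. apply (Cmul_eq0 _ _ Zero). unfold RtoC, C0.
    intros E; injection E. apply not_0_INR. lia.
  - intros l Hl Hlj. rewrite geom_sum by (auto; lia). apply Cmul_0r.
Qed.

Lemma Cnorm_eq0 z : Cnorm z = 0 -> z = C0.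
Proof. rewrite Cnorm_Cmod. intros H. apply Cmod_eq_0 in H. rewrite H. reflexivity. Qed.
Lemma Cnorm_opp z : Cnorm (Copp z) = Cnorm z.
Proof. unfold Cnorm, Copp; simpl. f_equal; ring. Qed.
Lemma Cnorm_scal r z : Cnorm (Cscal r z) = Rabs r * Cnorm z.
Proof.
  replace (Cscal r z) with (Cmul (RtoC r) z) by ceq. rewrite Cnorm_mul. f_equal.
  unfold Cnorm, RtoC; simpl. replace (r * r + 0 * 0) with (r * r) by ring. apply sqrt_Rsqr_abs.
Qed.
Lemma Cnorm_cis x : Cnorm (cis x) = 1.
Proof. unfold Cnorm, cis; simpl. rewrite <- sqrt_1. f_equal. generalize (sin2_cos2 x). unfold Rsqr. lra. Qed.

Lemma Omega_nz v w : is_Omega v w -> w <> C0.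
Proof. unfold is_Omega. intros H ->. revert H. unfold Cmul, C0, C1; simpl. intros H; injection H; intros; lra. Qed.

(* A sequence within bounded distance of (k/2pi)^{1/4} e^{i pi/4} w, w <> 0,
   is eventually nonzero (the reference grows without bound). *)
Lemma eventually_nonzero (P : nat -> Cplx) (w : Cplx) (C : R) : w <> C0 ->
  (forall k, (1 <= k)%nat ->
     Cnorm (Csub (P k) (Cscal (Rpower (INR k / (2 * PI)) (/ 4)) (Cmul (cis (PI / 4)) w))) <= C) ->
  exists K, forall k, (K <= k)%nat -> P k <> C0.
Proof.
  intros Hw HC. set (M := C / Cnorm w).
  assert (Hn : 0 < Cnorm w).
  { destruct (Cnorm_ge0 w) as [H|H]; auto. exfalso. apply Hw, Cnorm_eq0; auto. }
  set (X := 2 * PI * exp (4 * M)).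
  assert (Hpi := PI_RGT_0).
  destruct (archimed X) as [Hup _].
  exists (Z.to_nat (up X) + 1)%nat. intros k Hk E.
  specialize (HC k ltac:(lia)). rewrite E in HC.
  assert (HkX : X < INR k).
  { assert (HX : 0 < X) by (unfold X; generalize (exp_pos (4 * M)); intros; nra).
    apply Rlt_le_trans with (IZR (up X)); auto. rewrite INR_IZR_INZ. apply IZR_le.
    assert (0 <= up X)%Z by (apply le_IZR; lra). lia. }
  assert (Hlog : 4 * M < ln (INR k / (2 * PI))).
  { rewrite <- (ln_exp (4 * M)). apply ln_increasing. apply exp_pos.
    apply Rmult_lt_reg_l with (2 * PI). lra.
    replace (2 * PI * (INR k / (2 * PI))) with (INR k) by (field; lra).
    unfold X in HkX. lra. }
  assert (Hrp : M < Rpower (INR k / (2 * PI)) (/ 4)).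
  { unfold Rpower. apply Rlt_le_trans with (1 + / 4 * ln (INR k / (2 * PI))). lra.
    apply exp_ineq1_le. }
  replace (Csub C0 (Cscal (Rpower (INR k / (2 * PI)) (/ 4)) (Cmul (cis (PI / 4)) w)))
    with (Copp (Cscal (Rpower (INR k / (2 * PI)) (/ 4)) (Cmul (cis (PI / 4)) w))) in HC by ceq.
  rewrite Cnorm_opp, Cnorm_scal, Cnorm_mul, Cnorm_cis, Rmult_1_l in HC.
  rewrite Rabs_pos_eq in HC by (unfold Rpower; left; apply exp_pos).
  unfold M in Hrp. apply (Rmult_lt_compat_r (Cnorm w)) in Hrp; auto.
  unfold Rdiv in Hrp. rewrite Rmult_assoc, Rinv_l in Hrp by lra. lra.
Qed.

Lemma periodic_mod (f : Z -> Sec) (N : Z) : (0 < N)%Z ->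
  (forall n y, f (n + N)%Z y = f n y) -> forall n y, f n y = f (n mod N)%Z y.
Proof.
  intros HN H.
  assert (Mult : forall q n y, f (n + N * q)%Z y = f n y).
  { induction q using Z.peano_ind; intros n y.
    - rewrite Z.mul_0_r, Z.add_0_r; auto.
    - rewrite <- (IHq n y). replace (n + N * Z.succ q)%Z with (n + N * q + N)%Z by ring. apply H.
    - rewrite <- (IHq n y), <- (H (n + N * Z.pred q)%Z y). f_equal. rewrite Z.mul_pred_r. ring. }
  intros n y. rewrite (Z.div_mod n N) at 1 by lia. rewrite Z.add_comm, Mult; auto.
Qed.

Section PeriodicBasis.
Variables (k : nat) (u v : E) (b : Z -> Sec) (N : nat).
Hypothesis HB : is_ONB k u v b N.
Hypothesis HN : (0 < N)%nat.
Hypothesis Hper : forall n y, b (n + Z.of_nat N)%Z y = b n y.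

Lemma inner_coef_mod c n : inner_on u v (Slin c b N) (b n) (c (n mod Z.of_nat N)%Z).
Proof.
  eapply inner_ext; [| |apply (inner_coef k u v b N c (n mod Z.of_nat N)%Z HB)].
  - auto.
  - intros y. symmetry. apply periodic_mod; auto. lia.
  - apply Z.mod_pos_bound. lia.
Qed.

Lemma coef_odd (f : Sec) c :
  (forall y, f y = Slin c b N y) ->
  (forall y, f (negE y) = Copp (f y)) ->
  (forall n y, b n (negE y) = b (- n)%Z y) ->
  forall j, (0 <= j < Z.of_nat N)%Z -> c ((- j) mod Z.of_nat N)%Z = Copp (c j).
Proof.
  intros Hf Hodd Hb j Hj.
  assert (HN' : (0 < Z.of_nat N)%Z) by lia.
  assert (Reflected : inner_on u v (fun y => f (negE y)) (b j)
                        (c ((- j) mod Z.of_nat N)%Z)).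
  { eapply inner_ext; [| |apply (inner_coef k u v b N (fun n => c ((- n) mod Z.of_nat N)%Z) j HB Hj)].
    - intros y. rewrite Hf. unfold Slin.
      rewrite <- (Csum_perm (fun n => Cmul (c n) (b n (negE y)))
                            (fun n => ((- n) mod Z.of_nat N)%Z)).
      + apply Csum_ext. intros n _. rewrite Hb. f_equal.
        rewrite (periodic_mod b _ HN' Hper n), (periodic_mod b _ HN' Hper (- _)).
        rewrite opp_mod_mod, Z.opp_involutive; auto.
      + intros; apply Z.mod_pos_bound; lia.
      + intros i i' Hi Hi' E. apply (f_equal (fun x => ((- x) mod Z.of_nat N)%Z)) in E.
        rewrite !opp_mod_mod, !Z.opp_involutive, !Z.mod_small in E; auto.
    - auto. }
  assert (Odd : inner_on u v (fun y => f (negE y)) (b j) (Copp (c j))).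
  { replace (Copp (c j)) with (Cmul (Copp C1) (c j)) by ceq.
    eapply inner_ext; [| |apply (inner_cmul u v (Slin c b N) (b j) (c j) (Copp C1))].
    - intros y. rewrite Hodd, Hf. ceq.
    - auto.
    - apply (inner_coef k u v b N); auto. }
  apply (inner_uniq _ _ _ _ _ _ Reflected Odd).
Qed.
End PeriodicBasis.

Lemma Phi_Slin k D Psi l y : Phi k D Psi l y =
  Slin (fun m => Cmul (RtoC (/ sqrt (INR (2 * k * D)))) (ew D (m * l))) Psi (2 * k * D) y.
Proof.
  unfold Phi, Slin. rewrite <- Csum_scal. apply Csum_ext. intros m _. unfold ew.
  rewrite mult_IZR.
  replace (2 * PI * (IZR m * IZR l) / INR D) with (2 * PI * IZR m * IZR l / INR D)
    by (unfold Rdiv; ring).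
  ceq.
Qed.

Lemma gamma_coef_relation (k D : nat) lam mu Psi Zk cZ g lo hi :
  is_ONB k (Escal (INR D) mu) lam Psi (2 * k * D) -> (0 < k)%nat -> (0 < D)%nat ->
  (forall n y, Psi (n + Z.of_nat (2 * k * D))%Z y = Psi n y) ->
  (forall y, Zk y = Slin cZ Psi (2 * k * D) y) ->
  gamma_cond k D lam mu Zk Psi lo hi g ->
  forall n, (lo <= n < hi)%Z ->
  cZ (n mod Z.of_nat (2 * k * D))%Z =
    Cmul (RtoC (/ sqrt (INR (2 * k * D)))) (Csum (fun l => Cmul (g l) (ew D (n * l))) D).
Proof.
  intros HB Hk HD Hper HZ Hg n Hn.
  set (N := (2 * k * D)%nat). set (sg := RtoC (/ sqrt (INR N))).
  assert (HN : (0 < N)%nat) by (unfold N; lia).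
  assert (CoefZ : inner_on (Escal (INR D) mu) lam Zk (Psi n) (cZ (n mod Z.of_nat N)%Z)).
  { eapply inner_ext; [| |apply (inner_coef_mod k _ _ Psi N HB HN Hper cZ n)]; intros; auto. }
  assert (CoefPhi : forall l, inner_on (Escal (INR D) mu) lam (Phi k D Psi l) (Psi n)
                                (Cmul sg (ew D (n * l)))).
  { intros l. replace (Cmul sg (ew D (n * l))) with (Cmul sg (ew D (n mod Z.of_nat N * l))).
    - eapply inner_ext; [intros y; symmetry; apply Phi_Slin | intros; reflexivity |
        apply (inner_coef_mod k _ _ Psi N HB HN Hper (fun m => Cmul sg (ew D (m * l))) n)].
    - f_equal. rewrite (Z.div_mod n (Z.of_nat N)) at 2 by lia.
      replace ((Z.of_nat N * (n / Z.of_nat N) + n mod Z.of_nat N) * l)%Z with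
        (n mod Z.of_nat N * l + Z.of_nat D * (2 * Z.of_nat k * (n / Z.of_nat N) * l))%Z
        by (unfold N; lia).
      rewrite ew_periodic; auto. }
  assert (CoefSum : inner_on (Escal (INR D) mu) lam (Slin g (Phi k D Psi) D) (Psi n)
      (Csum (fun l => Cmul (g l) (Cmul sg (ew D (n * l)))) D)).
  { apply inner_Slin. intros; apply CoefPhi. }
  apply Csub_eq0. rewrite <- Csum_cmul.
  rewrite (Csum_ext (fun i => Cmul sg (Cmul (g i) (ew D (n * i))))
                    (fun l => Cmul (g l) (Cmul sg (ew D (n * l))))) by (intros; ceq).
  exact (inner_uniq _ _ _ _ _ _ (inner_sub _ _ _ _ _ _ _ CoefZ CoefSum) (Hg n Hn)).
Qed.

Lemma cis_angle_ne1 (i : Z) (T : R) : 0 < T -> (0 < i)%Z -> IZR i < 2 * T ->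
  cis (PI * IZR i / T) <> C1.
Proof.
  intros HT Hi HiT. apply cis_ne1. assert (Hpi := PI_RGT_0).
  assert (0 < IZR i) by (apply IZR_lt; auto).
  split.
  - apply Rdiv_lt_0_compat; nra.
  - apply Rmult_lt_reg_r with T; auto. unfold Rdiv. rewrite Rmult_assoc, Rinv_l by lra. nra.
Qed.

(* P xi_l = xi_{-l}: xi is an eigenbasis of M, and L shifts the index by -1. *)
Lemma xi_parity k lam mu Omu xi : (1 <= k)%nat -> is_Omega mu Omu -> is_xi_basis k lam mu Omu xi ->
  forall i y, xi i (negE y) = xi (- i)%Z y.
Proof.
  intros Hk HO [XPer [XH [XO [XE [XM [XL X0]]]]]].
  assert (Hk' : 0 < INR k) by (apply lt_0_INR; lia).
  apply (parity_basis k xi (Escal (- / (2 * INR k)) lam) (-1)%Z); [right; reflexivity| |].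
  - intros i y. rewrite XL. replace (i + -1)%Z with (i - 1)%Z by lia. reflexivity.
  - apply (basis_zero_even k lam mu (Escal (/ (2 * INR k)) mu) xi (2 * k)
           (fun i => PI * IZR i / INR k)); auto.
    + split; auto.
    + simpl. unfold Rdiv; ring.
    + intros i Hi. apply cis_angle_ne1; try lia; auto.
      replace (2 * INR k) with (IZR (Z.of_nat (2 * k)))
        by (rewrite <- INR_IZR_INZ, mult_INR; simpl; ring).
      apply IZR_lt; lia.
    + lia.
    + destruct X0 as [r [Hr E]]. rewrite E. intros H. apply (Omega_nz _ _ HO).
      revert H. destruct Omu. unfold Cscal, C0; simpl. intros H; injection H; intros.
      f_equal; apply (Rmult_eq_reg_l r); lra.
Qed.

(* P Psi_n = Psi_{-n}, provided Psi_0(0) <> 0: Psi is an eigenbasis of S and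
   R shifts the index by +1. *)
Lemma psi_parity k D lam mu Psi : (1 <= k)%nat -> (1 <= D)%nat -> is_Psi_basis k D lam mu Psi ->
  Psi 0%Z (0, 0) <> C0 -> forall i y, Psi i (negE y) = Psi (- i)%Z y.
Proof.
  intros Hk HD [PPer [PH [PO [PE [PS PR]]]]] H0.
  assert (Hk' : 0 < INR k) by (apply lt_0_INR; lia).
  assert (HD' : 0 < INR D) by (apply lt_0_INR; lia).
  apply (parity_basis k Psi (Escal (/ (2 * INR k * INR D))
                               (Eadd (Escal (INR D) mu) (Escal (-2) lam))) 1%Z);
    [left; reflexivity | exact PR |].
  apply (basis_zero_even k (Escal (INR D) mu) lam (Escal (- / (2 * INR k * INR D)) lam) Psi
           (2 * k * D) (fun i => PI * IZR i / (INR k * INR D))); auto.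
  - split; auto.
  - simpl. unfold Rdiv; ring.
  - intros i Hi. apply cis_angle_ne1; try lia; try nra.
    replace (2 * (INR k * INR D)) with (IZR (Z.of_nat (2 * k * D)))
      by (rewrite <- INR_IZR_INZ, !mult_INR; simpl; ring).
    apply IZR_lt; lia.
  - lia.
Qed.

(* The knot state is odd: P Z_k = - Z_k, by P xi_l = xi_{-l} = xi_{2k-l} and
   the reflection J_{2k-l} = - J_l. *)
Lemma knot_state_odd a b k lam mu Omu xi :
  (0 < a)%nat -> (0 < b)%nat -> Nat.gcd a b = 1%nat -> (1 <= k)%nat ->
  is_Omega mu Omu -> is_xi_basis k lam mu Omu xi ->
  forall y, knot_state a b k xi (negE y) = Copp (knot_state a b k xi y).
Proof.
  intros Ha Hb Hg Hk HO HX.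
  assert (XP := xi_parity k lam mu Omu xi Hk HO HX).
  destruct HX as [XPer _].
  intros y. unfold knot_state. set (c := sin (PI / INR k) / sqrt (INR k)).
  replace (Copp (Cscal c (Csum (fun l => Cmul (Jval a b k (Z.to_nat l)) (xi l y)) (2 * k))))
    with (Cscal c (Csum (fun l => Copp (Cmul (Jval a b k (Z.to_nat l)) (xi l y))) (2 * k)))
    by (rewrite Csum_opp; ceq).
  f_equal.
  set (refl := fun l : Z => if Z.eqb l 0 then 0%Z else (Z.of_nat (2 * k) - l)%Z).
  rewrite <- (Csum_perm (fun l => Copp (Cmul (Jval a b k (Z.to_nat l)) (xi l y))) refl).
  - apply Csum_ext. intros l Hl. unfold refl. rewrite XP.
    destruct (Z.eqb_spec l 0) as [->|Hl0].
    + simpl. ceq.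
    + rewrite <- (XPer (- l)%Z y).
      rewrite (Jval_reflection a b k (Z.to_nat (Z.of_nat (2 * k) - l)) (Z.to_nat l));
        auto; try lia.
      replace (- l + Z.of_nat (2 * k))%Z with (Z.of_nat (2 * k) - l)%Z by ring. ceq.
  - intros i Hi. unfold refl. destruct (Z.eqb_spec i 0); lia.
  - intros i j Hi Hj. unfold refl. destruct (Z.eqb_spec i 0), (Z.eqb_spec j 0); lia.
Qed.

Lemma knot_state_in_HD a b k D lam mu Omu xi : is_xi_basis k lam mu Omu xi ->
  in_H k (Escal (INR D) mu) lam (knot_state a b k xi).
Proof.
  intros [_ [XH _]].
  apply (in_H_ext k _ _ (Slin (fun l => Cmul (RtoC (sin (PI / INR k) / sqrt (INR k)))
                                            (Jval a b k (Z.to_nat l))) xi (2 * k))).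
  - intros y. unfold knot_state, Slin. rewrite <- Csum_scal. apply Csum_ext. intros. ceq.
  - apply in_H_Slin. intros i. apply in_H_sublattice, XH.
Qed.

Lemma fourier_reflection D (gp gm : Z -> Cplx) m0 : (0 < D)%nat ->
  (forall i, (0 <= i < Z.of_nat D)%Z ->
     Csum (fun l => Cmul (gm l) (ew D ((m0 + i) * l))) D
     = Copp (Csum (fun l => Cmul (gp l) (ew D (- (m0 + i) * l))) D)) ->
  forall l, (0 <= l < Z.of_nat D)%Z -> gm ((- l) mod Z.of_nat D)%Z = Copp (gp l).
Proof.
  intros HD Heq l Hl. assert (HD' : (0 < Z.of_nat D)%Z) by lia.
  set (refl := fun l => ((- l) mod Z.of_nat D)%Z).
  assert (Hrefl : forall i, (0 <= i < Z.of_nat D)%Z -> refl (refl i) = i).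
  { intros i Hi. unfold refl. rewrite opp_mod_mod, Z.opp_involutive, Z.mod_small; auto. }
  assert (Reindex : forall m, Csum (fun l => Cmul (gp l) (ew D (- m * l))) D =
                              Csum (fun l => Cmul (gp (refl l)) (ew D (m * l))) D).
  { intros m. rewrite <- (Csum_perm (fun l => Cmul (gp l) (ew D (- m * l))) refl).
    - apply Csum_ext. intros i Hi. f_equal.
      replace (- m * refl i)%Z with (m * i + Z.of_nat D * (m * (- i / Z.of_nat D)))%Z
        by (unfold refl; rewrite (Z.mod_eq (- i) (Z.of_nat D)) by lia; ring).
      apply ew_periodic; auto.
    - intros i _. apply Z.mod_pos_bound; lia.
    - intros i j Hi Hj E. rewrite <- (Hrefl i Hi), <- (Hrefl j Hj), E. reflexivity. }
  set (h := fun l => Cadd (gm l) (gp (refl l))).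
  assert (Hh : h (refl l) = C0).
  { apply (dft_window_inversion D h m0 HD); [|apply Z.mod_pos_bound; lia].
    intros i Hi. unfold h.
    rewrite (Csum_ext _ (fun l => Cadd (Cmul (gm l) (ew D ((m0 + i) * l)))
                                       (Cmul (gp (refl l)) (ew D ((m0 + i) * l)))))
      by (intros; ceq).
    rewrite Csum_add, Heq, Reindex by auto. ceq. }
  unfold h in Hh. rewrite Hrefl in Hh by auto. exact (Cadd_eq0 _ _ Hh).
Qed.

(* For m in  -2k + ab + a + b < m <= -2k + 3ab + a + b, m lies in the window of
   E_{k,-} and -m in the window of E_{k,+}, which gives D consecutive
   frequencies for fourier_reflection. *)
Lemma gamma_antisymmetry (k D : nat) lam mu Psi Zk cZ gp gm (A B : Z) :
  is_ONB k (Escal (INR D) mu) lam Psi (2 * k * D) -> (1 <= k)%nat ->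
  (forall n y, Psi (n + Z.of_nat (2 * k * D))%Z y = Psi n y) ->
  (forall y, Zk y = Slin cZ Psi (2 * k * D) y) ->
  (forall j, (0 <= j < Z.of_nat (2 * k * D))%Z ->
     cZ ((- j) mod Z.of_nat (2 * k * D))%Z = Copp (cZ j)) ->
  Z.of_nat D = (2 * A * B)%Z -> (1 <= A)%Z -> (1 <= B)%Z ->
  (2 * A * B + A + B + 2 <= Z.of_nat k)%Z ->
  gamma_cond k D lam mu Zk Psi (- A * B + A + B)%Z (2 * Z.of_nat k - A * B - A - B)%Z gp ->
  gamma_cond k D lam mu Zk Psi (- 2 * Z.of_nat k - A * B + A + B)%Z (- A * B - A - B)%Z gm ->
  forall l, (0 <= l < Z.of_nat D)%Z -> gm ((- l) mod Z.of_nat D)%Z = Copp (gp l).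
Proof.
  intros HB Hk Hper HZ Hodd HD HA HB1 Hkbig Hgp Hgm.
  set (N := (2 * k * D)%nat) in *.
  assert (HN : (0 < Z.of_nat N)%Z) by (unfold N; lia).
  set (sg := RtoC (/ sqrt (INR N))).
  assert (Hsg : sg <> C0).
  { unfold sg, RtoC, C0. intros H. injection H. apply Rinv_neq_0_compat.
    apply Rgt_not_eq, sqrt_lt_R0, lt_0_INR. lia. }
  apply (fourier_reflection D gp gm (- 2 * Z.of_nat k + A * B + A + B + 1)); [lia|].
  intros i Hi. set (m := (- 2 * Z.of_nat k + A * B + A + B + 1 + i)%Z).
  assert (GM := gamma_coef_relation k D lam mu Psi Zk cZ gm _ _ HB ltac:(lia) ltac:(lia)
                  Hper HZ Hgm m ltac:(unfold m; lia)).
  assert (GP := gamma_coef_relation k D lam mu Psi Zk cZ gp _ _ HB ltac:(lia) ltac:(lia)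
                  Hper HZ Hgp (- m) ltac:(unfold m; lia)).
  assert (Odd : cZ (m mod Z.of_nat N)%Z = Copp (cZ ((- m) mod Z.of_nat N)%Z)).
  { rewrite <- Hodd by (apply Z.mod_pos_bound; lia).
    rewrite opp_mod_mod, Z.opp_involutive; auto. }
  fold N sg in GM, GP. rewrite GM, GP in Odd.
  apply Cadd_eq0, (Cmul_eq0 _ sg); auto.
  revert Odd. generalize (Csum (fun l => Cmul (gm l) (ew D (m * l))) D),
    (Csum (fun l => Cmul (gp l) (ew D (- m * l))) D). intros X Y Odd.
  rewrite Cmul_comm, Cmul_addr, Odd. ceq.
Qed.

Theorem mainTheorem10 :
  forall (a b : nat), (0 < a)%nat -> (0 < b)%nat -> Nat.gcd a b = 1%nat ->
  let D := (2 * a * b)%nat in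
  forall (lam mu : E), omega mu lam = 4 * PI ->
  forall (Omu Olam : Cplx), is_Omega mu Omu -> is_Omega lam Olam ->
  forall (xi : nat -> Z -> Sec),
    (forall k, (1 <= k)%nat -> is_xi_basis k lam mu Omu (xi k)) ->
    O_inf (fun k => Cnorm (Csub (Z0_state k (xi k) (0, 0))
             (Cscal (/ sqrt 2 * Rpower (INR k / (2 * PI)) (/ 4))
                    (Cmul (cis (3 * PI / 4)) Olam)))) ->
  forall (Psi : nat -> Z -> Sec),
    (forall k, (1 <= k)%nat -> is_Psi_basis k D lam mu (Psi k)) ->
    O_inf (fun k => Cnorm (Csub (Psi k 0%Z (0, 0))
             (Cscal (Rpower (INR k / (2 * PI)) (/ 4)) (Cmul (cis (PI / 4)) Olam)))) ->
  exists K : nat, forall k : nat, (K <= k)%nat ->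
    forall gp gm : Z -> Cplx,
      let A := Z.of_nat a in let B := Z.of_nat b in let Kz := Z.of_nat k in
      gamma_cond k D lam mu (knot_state a b k (xi k)) (Psi k)
        (- A * B + A + B)%Z (2 * Kz - A * B - A - B)%Z gp ->
      gamma_cond k D lam mu (knot_state a b k (xi k)) (Psi k)
        (- 2 * Kz - A * B + A + B)%Z (- A * B - A - B)%Z gm ->
      forall l : Z, (0 <= l < Z.of_nat D)%Z ->
        gm ((- l) mod Z.of_nat D)%Z = Copp (gp l).
Proof.
  intros a b Ha Hb Hgab D lam mu _ Omu Olam HOmu HOlam xi Hxi _ Psi HPsi HPsi0.
  (* For k large, Psi_0(0) <> 0 by its asymptotics. *)
  destruct (HPsi0 0%nat) as [C HC].
  destruct (eventually_nonzero (fun k => Psi k 0%Z (0, 0)) Olam C (Omega_nz _ _ HOlam))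
    as [K1 HK1].
  { intros k Hk. specialize (HC k Hk). simpl in HC.
    rewrite Rdiv_1_r, Rabs_pos_eq in HC by apply Cnorm_ge0. exact HC. }
  exists (Nat.max K1 (2 * a * b + a + b + 2)). intros k Hk gp gm A B Kz Hgp Hgm.
  assert (Hk1 : (1 <= k)%nat) by lia.
  destruct (HPsi k Hk1) as [PPer [PH [PO [PE [PS PR]]]]].
  destruct (PE _ (knot_state_in_HD a b k D lam mu Omu (xi k) (Hxi k Hk1))) as [cZ HcZ].
  assert (ONB : is_ONB k (Escal (INR D) mu) lam (Psi k) (2 * k * D)) by (split; auto).
  apply (gamma_antisymmetry k D lam mu (Psi k) _ cZ gp gm A B ONB Hk1 PPer HcZ);
    try (unfold D, A, B, Kz in *; lia); auto.
  (* The coefficients of the odd state Z_k on the parity-symmetric basis are odd. *)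
  apply (coef_odd k _ _ (Psi k) (2 * k * D) ONB ltac:(unfold D; lia) PPer _ cZ HcZ).
  - apply (knot_state_odd a b k lam mu Omu); auto.
  - apply (psi_parity k D lam mu); auto. unfold D; lia. apply HK1; lia.
Qed.
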